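(* Let $f\in\mathcal{B}$ satisfy $\|f-f_0\|_{\mathcal{B}}<\frac14$, where $f_0=10\cosh-12$. Then $f\colon\mathbb{D}\to f(\mathbb{D})$ is a quadratic-like map and $f(0)\in(-\infty,-1)$.
   Context: $\mathcal{B}$ is the real Banach space of real and even entire maps $f$ (i.e. $f(\bar z)=\overline{f(z)}$, $f(-z)=f(z)$) such that the sequence $(f^{(j)}(0))_{j\ge0}$ is bounded, with norm $\|f\|_{\mathcal{B}}=\sup_{j\ge0}|f^{(j)}(0)|$; $f_0$ is the map $z\mapsto10\cosh(z)-12$. $\mathbb{D}$ is the open unit disk. A quadratic-like map is a holomorphic proper map $f\colon V\to W$ of degree $2$, where $V,W$ are nonempty simply connected open subsets of $\mathbb{C}$ with $V$ relatively compact in $W$. *)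

From Stdlib Require Import Reals Lra List.
From Coquelicot Require Import Coquelicot.
Open Scope R_scope.

Definition Cderiv (f : C -> C) (z l : C) : Prop :=
  @is_derive C_AbsRing C_NormedModule f z l.

Definition entire (f : C -> C) : Prop := forall z, exists l, Cderiv f z l.

Definition derivs_on (U : C -> Prop) (f : C -> C) (d : nat -> C -> C) : Prop :=
  (forall z, U z -> d O z = f z) /\
  (forall n z, U z -> Cderiv (d n) z (d (S n) z)).

Definition Cplane : C -> Prop := fun _ => True.

Definition in_B (f : C -> C) : Prop :=
  entire f /\
  (forall z, f (Cconj z) = Cconj (f z)) /\
  (forall z, f (Copp z) = f z) /\
  exists d, derivs_on Cplane f d /\ exists M, forall j, Cmod (d j 0%C) <= M.

Definition B_norm (g : C -> C) : Rbar :=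
  Lub_Rbar (fun x => exists d, derivs_on Cplane g d /\ exists j, x = Cmod (d j 0%C)).

Definition cexp (z : C) : C := (exp (fst z) * cos (snd z), exp (fst z) * sin (snd z)).
Definition ccosh (z : C) : C := Cdiv (Cplus (cexp z) (cexp (Copp z))) (RtoC 2).

Definition f0 (z : C) : C := Cminus (Cmult (RtoC 10) (ccosh z)) (RtoC 12).

Definition unit_disk : C -> Prop := fun z => Cmod z < 1.
Definition image_of (f : C -> C) (V : C -> Prop) : C -> Prop :=
  fun w => exists z, V z /\ f z = w.

Definition openC (U : C -> Prop) : Prop :=
  forall z, U z -> exists e, 0 < e /\ forall y, Cmod (Cminus y z) < e -> U y.
Definition closureC (U : C -> Prop) : C -> Prop :=
  fun z => forall e, 0 < e -> exists y, U y /\ Cmod (Cminus y z) < e.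
Definition compactC (K : C -> Prop) : Prop :=
  forall (I : Type) (O : I -> C -> Prop),
    (forall i, openC (O i)) -> (forall z, K z -> exists i, O i z) ->
    exists l : list I, forall z, K z -> exists i, In i l /\ O i z.
Definition nonemptyC (U : C -> Prop) : Prop := exists z, U z.

Definition I01 (t : R) : Prop := 0 <= t <= 1.
Definition path_in (U : C -> Prop) (g : R -> C) : Prop :=
  (forall t, I01 t -> U (g t)) /\
  (forall t e, I01 t -> 0 < e -> exists dl, 0 < dl /\
     forall t', I01 t' -> Rabs (t' - t) < dl -> Cmod (Cminus (g t') (g t)) < e).
Definition homotopy_in (U : C -> Prop) (H : R -> R -> C) : Prop :=
  (forall s t, I01 s -> I01 t -> U (H s t)) /\
  (forall s t e, I01 s -> I01 t -> 0 < e -> exists dl, 0 < dl /\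
     forall s' t', I01 s' -> I01 t' -> Rabs (s' - s) < dl -> Rabs (t' - t) < dl ->
       Cmod (Cminus (H s' t') (H s t)) < e).

Definition path_connectedC (U : C -> Prop) : Prop :=
  forall a b, U a -> U b -> exists g, path_in U g /\ g 0 = a /\ g 1 = b.

(** Simply connected: path-connected and every loop is (freely, through loops)
    homotopic in U to a constant loop. *)
Definition simply_connectedC (U : C -> Prop) : Prop :=
  path_connectedC U /\
  forall g, path_in U g -> g 0 = g 1 ->
    exists H, homotopy_in U H /\
      (forall t, I01 t -> H 0 t = g t) /\
      (forall t, I01 t -> H 1 t = H 1 0) /\
      (forall s, I01 s -> H s 0 = H s 1).

(** Multiplicity of z as a solution of f(z) = f(z0): the least k >= 1 with f^(k)(z) <> 0. *)
Definition multiplicity_on (V : C -> Prop) (f : C -> C) (z : C) (k : nat) : Prop :=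
  (1 <= k)%nat /\ exists d, derivs_on V f d /\ d k z <> 0%C /\
    (forall j, (1 <= j < k)%nat -> d j z = 0%C).

Definition degree2_on (V W : C -> Prop) (f : C -> C) : Prop :=
  forall w, W w -> exists l : list (C * nat),
    NoDup (map fst l) /\
    (forall z, In z (map fst l) <-> (V z /\ f z = w)) /\
    (forall p, In p l -> multiplicity_on V f (fst p) (snd p)) /\
    fold_right Nat.add O (map snd l) = 2%nat.

Definition holomorphic_on (V : C -> Prop) (f : C -> C) : Prop :=
  forall z, V z -> exists l, Cderiv f z l.

Definition proper_on (V W : C -> Prop) (f : C -> C) : Prop :=
  forall K, compactC K -> (forall w, K w -> W w) -> compactC (fun z => V z /\ K (f z)).

Definition quadratic_like (f : C -> C) (V W : C -> Prop) : Prop :=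
  nonemptyC V /\ nonemptyC W /\ openC V /\ openC W /\
  simply_connectedC V /\ simply_connectedC W /\
  compactC (closureC V) /\ (forall z, closureC V z -> W z) /\
  (forall z, V z -> W (f z)) /\
  holomorphic_on V f /\ proper_on V W f /\ degree2_on V W f.

(** If [|f - f0|_B < 1/4], then [f(0)] is within [1/4] of [-2] and every even derivative
    [f^(2k)(0)], [k >= 1], is within [1/4] of [10].  Cauchy estimates make the Taylor series of
    [f] converge geometrically on the closed unit disk; as [f] is even, [f(z) = g(z^2)] where,
    with [L = f''(0)/2] close to [5], summing the Taylor tail gives
    [|g(u1) - g(u2) - L (u1 - u2)| <= 41/44 |u1 - u2|] on the closed disk.  So [g] is
    bi-Lipschitz and, by the contraction principle, open; its image of the unit disk is
    simply connected and contains the closed unit disk.  Every value of [f] on the disk is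
    taken exactly at [z] and [-z], with multiplicity [2] only at the critical point [0], and
    points of the unit circle are not mapped into [f(D)], which gives properness. *)

From Stdlib Require Import Reals Lra Lia List Factorial.
From Stdlib Require Import Classical ClassicalEpsilon FunctionalExtensionality.
From Coquelicot Require Import Coquelicot.
Open Scope R_scope.

Lemma im_le_Cmod (c : C) : Rabs (Im c) <= Cmod c.
Proof.
  unfold Cmod. rewrite <- sqrt_Rsqr_abs. apply sqrt_le_1_alt.
  destruct c as [x y]; unfold Rsqr; simpl. nra.
Qed.

Lemma Cmod_le_Re_Im (c : C) : Cmod c <= Rabs (Re c) + Rabs (Im c).
Proof.
  destruct c as [x y]. unfold Cmod; simpl.
  pose proof (Rabs_pos x); pose proof (Rabs_pos y).
  apply Rsqr_incr_0_var; [|lra].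
  rewrite Rsqr_sqrt by nra.
  pose proof (Rsqr_abs x) as Ex; pose proof (Rsqr_abs y) as Ey.
  unfold Rsqr in *. simpl. nra.
Qed.

Lemma Cminus_diag (a : C) : (a - a)%C = 0.
Proof. ring. Qed.

Lemma Cminus_0_r (a : C) : (a - 0)%C = a.
Proof. ring. Qed.

Lemma Cmod_minus_sym (a b : C) : Cmod (a - b) = Cmod (b - a).
Proof. replace (a - b)%C with (- (b - a))%C by ring. apply Cmod_opp. Qed.

Lemma Cmod_triangle_minus (a b c : C) : Cmod (a - c) <= Cmod (a - b) + Cmod (b - c).
Proof. replace (a - c)%C with ((a - b) + (b - c))%C by ring. apply Cmod_triangle. Qed.

Lemma Cmod_minus_le (a b : C) : Cmod (a - b) <= Cmod a + Cmod b.
Proof. rewrite <- (Cmod_opp b). apply Cmod_triangle. Qed.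

Lemma Cmod_minus_eq_0 (a b : C) : Cmod (a - b) = 0 -> a = b.
Proof.
  intros H. apply Cmod_eq_0 in H.
  replace a with ((a - b) + b)%C by ring. rewrite H. ring.
Qed.

Lemma Cmod_RtoC_mult (r : R) (c : C) : Cmod (r * c) = Rabs r * Cmod c.
Proof. rewrite Cmod_mult, Cmod_R. reflexivity. Qed.

Lemma Cmod_sqr_le_1 (z : C) : Cmod z <= 1 -> Cmod (z * z) <= 1.
Proof. intros H. rewrite Cmod_mult. pose proof (Cmod_ge_0 z). nra. Qed.

Lemma Cmod_sqr_lt_1 (z : C) : Cmod z < 1 -> Cmod (z * z) < 1.
Proof. intros H. rewrite Cmod_mult. pose proof (Cmod_ge_0 z). nra. Qed.

Lemma Cmult_integral (a b : C) : (a * b = 0)%C -> a = 0 \/ b = 0.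
Proof.
  intros H. destruct (Ceq_dec a 0) as [|Ha]; auto. destruct (Ceq_dec b 0) as [|Hb]; auto.
  exfalso. exact (Cmult_neq_0 a b Ha Hb H).
Qed.

Lemma Csqr_eq (w z : C) : (w * w = z * z)%C -> w = z \/ w = (- z)%C.
Proof.
  intros H.
  assert (Hp : ((w - z) * (w + z) = 0)%C).
  { replace ((w - z) * (w + z))%C with (w * w - z * z)%C by ring. rewrite H. ring. }
  destruct (Cmult_integral _ _ Hp) as [E|E].
  - left. replace w with ((w - z) + z)%C by ring. rewrite E. ring.
  - right. replace w with ((w + z) - z)%C by ring. rewrite E. ring.
Qed.

(** * Complex derivatives *)

Lemma locally_C_iff (z : C) (P : C -> Prop) :
  @locally (AbsRing_UniformSpace C_AbsRing) z P <->
  exists e, 0 < e /\ forall y, Cmod (y - z) < e -> P y.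
Proof.
  split.
  - intros [e He]. exists e. split; [apply cond_pos|]. intros y Hy. apply He. exact Hy.
  - intros [e [He H]]. exists (mkposreal e He). intros y Hy. apply H. exact Hy.
Qed.

Lemma Cderiv_iff (f : C -> C) (z l : C) :
  Cderiv f z l <->
  forall eps, 0 < eps -> exists del, 0 < del /\ forall y, Cmod (y - z) < del ->
    Cmod (f y - f z - (y - z) * l) <= eps * Cmod (y - z).
Proof.
  split.
  - intros [_ H] eps Heps.
    apply (locally_C_iff z), (H z (fun P HP => HP) (mkposreal eps Heps)).
  - intros H. split; [apply is_linear_scal_l|].
    intros x Hx.
    apply (@is_filter_lim_locally_unique C_AbsRing (AbsRing_NormedModule C_AbsRing)) in Hx.
    subst x. intros eps. apply locally_C_iff. exact (H eps (cond_pos eps)).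
Qed.

Lemma Cderiv_ext (f g : C -> C) (z l : C) :
  (forall x, f x = g x) -> Cderiv f z l -> Cderiv g z l.
Proof.
  intros E H. apply (is_derive_ext f g z l E H).
Qed.

Lemma Cderiv_plus (f g : C -> C) (z a b : C) :
  Cderiv f z a -> Cderiv g z b -> Cderiv (fun x => f x + g x)%C z (a + b)%C.
Proof. exact (@is_derive_plus C_AbsRing C_NormedModule f g z a b). Qed.

Lemma Cderiv_minus (f g : C -> C) (z a b : C) :
  Cderiv f z a -> Cderiv g z b -> Cderiv (fun x => f x - g x)%C z (a - b)%C.
Proof. exact (@is_derive_minus C_AbsRing C_NormedModule f g z a b). Qed.

Lemma Cderiv_const (c z : C) : Cderiv (fun _ => c) z 0.
Proof. exact (@is_derive_const C_AbsRing C_NormedModule c z). Qed.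

Lemma Cderiv_scal (c : C) (f : C -> C) (z a : C) :
  Cderiv f z a -> Cderiv (fun x => c * f x)%C z (c * a)%C.
Proof.
  intros H. apply Cderiv_iff. intros eps Heps.
  pose proof (Cmod_ge_0 c) as Hc.
  destruct (proj1 (Cderiv_iff f z a) H (eps / (Cmod c + 1))) as [d [Hd H']].
  { apply Rdiv_lt_0_compat; lra. }
  exists d; split; auto. intros y Hy.
  replace (c * f y - c * f z - (y - z) * (c * a))%C
    with (c * (f y - f z - (y - z) * a))%C by ring.
  rewrite Cmod_mult. specialize (H' y Hy). pose proof (Cmod_ge_0 (y - z)).
  assert (Cmod c * (eps / (Cmod c + 1)) <= eps).
  { apply (Rmult_le_reg_r (Cmod c + 1)); [lra|].
    unfold Rdiv. rewrite Rmult_assoc, (Rmult_assoc eps), Rinv_l by lra. nra. }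
  pose proof (Cmod_ge_0 (f y - f z - (y - z) * a)).
  apply (Rle_trans _ (Cmod c * (eps / (Cmod c + 1) * Cmod (y - z)))).
  - apply Rmult_le_compat_l; auto.
  - rewrite <- Rmult_assoc. apply Rmult_le_compat_r; auto.
Qed.

Lemma Cderiv_comp_opp (f : C -> C) (z a : C) :
  Cderiv f (- z)%C a -> Cderiv (fun x => f (- x))%C z (- a)%C.
Proof.
  intros H. apply Cderiv_iff. intros eps Heps.
  destruct (proj1 (Cderiv_iff f (- z)%C a) H eps Heps) as [d [Hd H']].
  exists d; split; auto. intros y Hy.
  assert (E : (- y - - z = - (y - z))%C) by ring.
  replace (f (- y) - f (- z) - (y - z) * - a)%C
    with (f (- y) - f (- z) - (- y - - z) * a)%C by (rewrite E; ring).
  rewrite <- (Cmod_opp (y - z)), <- E. apply H'. rewrite E, Cmod_opp. exact Hy.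
Qed.

Definition Ccont (f : C -> C) (z : C) : Prop :=
  forall eps, 0 < eps -> exists del, 0 < del /\ forall y, Cmod (y - z) < del ->
    Cmod (f y - f z) < eps.

Lemma Cderiv_cont (f : C -> C) (z l : C) : Cderiv f z l -> Ccont f z.
Proof.
  intros H eps Heps. destruct (proj1 (Cderiv_iff f z l) H 1 Rlt_0_1) as [d [Hd H']].
  set (K := Cmod l + 1). assert (HK : 0 < K) by (unfold K; pose proof (Cmod_ge_0 l); lra).
  exists (Rmin d (eps / K)). split; [apply Rmin_pos; [lra|apply Rdiv_lt_0_compat; lra]|].
  intros y Hy. specialize (H' y (Rlt_le_trans _ _ _ Hy (Rmin_l _ _))).
  assert (Hy2 : Cmod (y - z) * K < eps).
  { apply (Rmult_lt_reg_r (/ K)); [apply Rinv_0_lt_compat; lra|].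
    rewrite Rmult_assoc, Rinv_r, Rmult_1_r by lra. exact (Rlt_le_trans _ _ _ Hy (Rmin_r _ _)). }
  replace (f y - f z)%C with ((f y - f z - (y - z) * l) + (y - z) * l)%C by ring.
  eapply Rle_lt_trans; [apply Cmod_triangle|]. rewrite Cmod_mult.
  unfold K in Hy2. pose proof (Cmod_ge_0 l). pose proof (Cmod_ge_0 (y - z)). nra.
Qed.

Lemma is_derive_continuity_pt (g : R -> R) (t l : R) : is_derive g t l -> continuity_pt g t.
Proof. intros H. apply derivable_continuous_pt. exists l. apply is_derive_Reals, H. Qed.

Lemma MVT_abs_le (g dg : R -> R) (x y M : R) :
  (forall t, is_derive g t (dg t)) ->
  (forall t, Rmin x y <= t <= Rmax x y -> Rabs (dg t) <= M) ->
  Rabs (g y - g x) <= M * Rabs (y - x).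
Proof.
  intros Hd Hb.
  destruct (MVT_gen g x y dg) as [c [Hc He]].
  - intros t _. apply Hd.
  - intros t _. eapply is_derive_continuity_pt, Hd.
  - rewrite He, Rabs_mult. apply Rmult_le_compat_r; [apply Rabs_pos|]. apply Hb, Hc.
Qed.

(** The constant is [M], not the sharp [M / 2]: two applications of the mean value theorem. *)
Lemma Taylor2_abs_le (g dg ddg : R -> R) (x y M : R) :
  (forall t, is_derive g t (dg t)) ->
  (forall t, is_derive dg t (ddg t)) ->
  (forall t, Rmin x y <= t <= Rmax x y -> Rabs (ddg t) <= M) ->
  Rabs (g y - g x - dg x * (y - x)) <= M * (y - x) ^ 2.
Proof.
  intros H1 H2 Hb.
  assert (HM : 0 <= M).
  { apply (Rle_trans _ (Rabs (ddg x))); [apply Rabs_pos|]. apply Hb.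
    split; [apply Rmin_l|apply Rmax_l]. }
  set (h := fun t => g t - dg x * t).
  assert (Hh : forall t, is_derive h t (dg t - dg x)).
  { intros t. unfold h. replace (dg t - dg x) with (dg t - dg x * 1) by ring.
    apply (is_derive_minus g (fun t => dg x * t)); [apply H1|].
    apply is_derive_scal, (is_derive_id t). }
  assert (B : Rabs (h y - h x) <= (M * Rabs (y - x)) * Rabs (y - x)).
  { apply (MVT_abs_le h (fun t => dg t - dg x)); [apply Hh|].
    intros t Ht. eapply Rle_trans; [apply (MVT_abs_le dg ddg x t M H2)|].
    - intros s Hs. apply Hb. revert Ht Hs. unfold Rmin, Rmax.
      repeat destruct Rle_dec; intros; lra.
    - apply Rmult_le_compat_l; auto. revert Ht; unfold Rmin, Rmax, Rabs.
      repeat destruct Rle_dec; repeat destruct Rcase_abs; intros; lra. }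
  unfold h in B.
  replace (g y - g x - dg x * (y - x)) with (g y - dg x * y - (g x - dg x * x)) by ring.
  eapply Rle_trans; [exact B|]. rewrite Rmult_assoc, <- Rabs_mult, Rabs_right.
  - right. ring.
  - apply Rle_ge. replace ((y - x) * (y - x)) with ((y - x) ^ 2) by ring. apply pow2_ge_0.
Qed.

Lemma exp_le_3_of_le_1 (t : R) : t <= 1 -> exp t <= 3.
Proof.
  intros H. eapply Rle_trans; [|apply exp_le_3].
  destruct (Req_dec t 1) as [->|]; [lra|]. left; apply exp_increasing; lra.
Qed.

Lemma Rabs_exp_le_3_between (a t : R) : Rabs a <= 1 -> Rmin 0 a <= t <= Rmax 0 a -> Rabs (exp t) <= 3.
Proof.
  intros Ha Ht. rewrite Rabs_right by (left; apply exp_pos). apply exp_le_3_of_le_1.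
  revert Ha Ht. unfold Rmin, Rmax, Rabs. repeat destruct Rle_dec; destruct Rcase_abs; intros; lra.
Qed.

Lemma Rabs_exp_sub_1_sub_le (a : R) : Rabs a <= 1 -> Rabs (exp a - 1 - a) <= 3 * a ^ 2.
Proof.
  intros Ha. pose proof (Taylor2_abs_le exp exp exp 0 a 3 is_derive_exp is_derive_exp) as T.
  rewrite exp_0, Rminus_0_r, Rmult_1_l in T. apply T. intros t Ht. apply (Rabs_exp_le_3_between a); auto.
Qed.

Lemma Rabs_exp_sub_1_le (a : R) : Rabs a <= 1 -> Rabs (exp a - 1) <= 3 * Rabs a.
Proof.
  intros Ha. pose proof (MVT_abs_le exp exp 0 a 3 is_derive_exp) as T.
  rewrite exp_0, Rminus_0_r in T. apply T. intros t Ht. apply (Rabs_exp_le_3_between a); auto.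
Qed.

Lemma Rabs_cos_sub_1_le (b : R) : Rabs (cos b - 1) <= b ^ 2.
Proof.
  assert (Hmsin : forall t, is_derive (fun x => - sin x) t (- cos t)).
  { intros t. apply (is_derive_opp sin), is_derive_sin. }
  pose proof (Taylor2_abs_le cos (fun x => - sin x) (fun x => - cos x) 0 b 1 is_derive_cos Hmsin) as T.
  rewrite cos_0, sin_0, Rminus_0_r, Rmult_1_l in T.
  replace (cos b - 1) with (cos b - 1 - - 0 * b) by ring. apply T.
  intros t _. rewrite Rabs_Ropp. apply Rabs_le, COS_bound.
Qed.

Lemma Rabs_sin_sub_le (b : R) : Rabs (sin b - b) <= b ^ 2.
Proof.
  pose proof (Taylor2_abs_le sin cos (fun x => - sin x) 0 b 1 is_derive_sin is_derive_cos) as T.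
  rewrite cos_0, sin_0, !Rminus_0_r, !Rmult_1_l in T. apply T.
  intros t _. rewrite Rabs_Ropp. apply Rabs_le, SIN_bound.
Qed.

Lemma Rabs_sin_le (b : R) : Rabs (sin b) <= Rabs b.
Proof.
  pose proof (MVT_abs_le sin cos 0 b 1 is_derive_sin) as T.
  rewrite sin_0, !Rminus_0_r, Rmult_1_l in T. apply T.
  intros t _. apply Rabs_le, COS_bound.
Qed.

Definition csinh (z : C) : C := ((cexp z - cexp (- z)) / 2)%C.

Lemma cexp_plus (a b : C) : cexp (a + b) = (cexp a * cexp b)%C.
Proof.
  destruct a as [x1 y1], b as [x2 y2]. unfold cexp, Cplus, Cmult; simpl.
  rewrite exp_plus, cos_plus, sin_plus. f_equal; ring.
Qed.

Lemma cexp_0 : cexp 0 = 1.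
Proof. unfold cexp; simpl. rewrite exp_0, cos_0, sin_0. unfold RtoC. f_equal; ring. Qed.

Lemma pow2_le_of_Rabs_le (a b : R) : Rabs a <= b -> a ^ 2 <= b ^ 2.
Proof.
  intros H. rewrite <- (pow2_abs a). pose proof (Rabs_pos a).
  apply pow_incr. lra.
Qed.

Lemma Cmod_cexp_sub_1_sub_le (h : C) : Cmod h <= 1 -> Cmod (cexp h - 1 - h) <= 10 * Cmod h ^ 2.
Proof.
  intros Hh. pose proof (re_le_Cmod h) as Hre. pose proof (im_le_Cmod h) as Him.
  destruct h as [a b]. simpl in Hre, Him. set (m := Cmod (a, b)) in *.
  eapply Rle_trans; [apply Cmod_le_Re_Im|]. unfold cexp; simpl.
  replace (exp a * cos b + - (1) + - a) with ((exp a - 1 - a) + exp a * (cos b - 1)) by ring.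
  replace (exp a * sin b + - 0 + - b) with ((exp a - 1) * sin b + (sin b - b)) by ring.
  assert (Ha : Rabs a <= 1) by lra.
  pose proof (Rabs_exp_sub_1_sub_le a Ha). pose proof (Rabs_exp_sub_1_le a Ha).
  pose proof (Rabs_cos_sub_1_le b). pose proof (Rabs_sin_sub_le b). pose proof (Rabs_sin_le b).
  pose proof (exp_le_3_of_le_1 a ltac:(unfold Rabs in Ha; destruct Rcase_abs; lra)).
  pose proof (exp_pos a).
  pose proof (pow2_le_of_Rabs_le a _ Hre) as Sa. pose proof (pow2_le_of_Rabs_le b _ Him) as Sb.
  fold m in Sa, Sb.
  assert (E1 : Rabs (exp a - 1 - a + exp a * (cos b - 1)) <= 3 * m ^ 2 + 3 * m ^ 2).
  { eapply Rle_trans; [apply Rabs_triang|]. rewrite Rabs_mult, (Rabs_right (exp a)) by lra.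
    pose proof (Rabs_pos (cos b - 1)). nra. }
  assert (E2 : Rabs ((exp a - 1) * sin b + (sin b - b)) <= 3 * m ^ 2 + m ^ 2).
  { eapply Rle_trans; [apply Rabs_triang|]. rewrite Rabs_mult.
    pose proof (Rabs_pos (exp a - 1)). pose proof (Rabs_pos (sin b)).
    pose proof (Rabs_pos a). pose proof (Rabs_pos b).
    assert (Rabs (exp a - 1) * Rabs (sin b) <= 3 * Rabs a * Rabs b) by (apply Rmult_le_compat; nra).
    assert (Rabs a * Rabs b <= m * m) by (apply Rmult_le_compat; auto).
    simpl in *. nra. }
  simpl in *; lra.
Qed.

Lemma Cderiv_cexp (z : C) : Cderiv cexp z (cexp z).
Proof.
  apply Cderiv_iff. intros eps Heps.
  set (K := Cmod (cexp z)). assert (HK : 0 <= K) by apply Cmod_ge_0.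
  set (d := eps / (10 * K + 1)). assert (Hd : 0 < d) by (apply Rdiv_lt_0_compat; lra).
  exists (Rmin 1 d). split; [apply Rmin_pos; lra|].
  intros y Hy. set (h := (y - z)%C) in *.
  replace y with (z + h)%C by (unfold h; ring). rewrite cexp_plus.
  replace (z + h - z)%C with h by ring.
  replace (cexp z * cexp h - cexp z - h * cexp z)%C with (cexp z * (cexp h - 1 - h))%C by ring.
  rewrite Cmod_mult. fold K.
  pose proof (Rmin_l 1 d). pose proof (Rmin_r 1 d). pose proof (Cmod_ge_0 h).
  pose proof (Cmod_cexp_sub_1_sub_le h ltac:(lra)).
  assert (Cmod h * (10 * K + 1) <= eps).
  { unfold d in *. apply (Rmult_le_reg_r (/ (10 * K + 1))); [apply Rinv_0_lt_compat; lra|].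
    rewrite Rmult_assoc, Rinv_r, Rmult_1_r by lra. lra. }
  apply (Rle_trans _ (K * (10 * Cmod h ^ 2))); [apply Rmult_le_compat_l; auto|].
  simpl. nra.
Qed.

Lemma Cderiv_cexp_opp (z : C) : Cderiv (fun x => cexp (- x)) z (- cexp (- z))%C.
Proof. apply Cderiv_comp_opp, Cderiv_cexp. Qed.

Lemma Cderiv_ccosh (z : C) : Cderiv ccosh z (csinh z).
Proof.
  apply (Cderiv_ext (fun x => / 2 * (cexp x + cexp (- x)))%C).
  { intros x. unfold ccosh, Cdiv. ring. }
  replace (csinh z) with (/ 2 * (cexp z + - cexp (- z)))%C by (unfold csinh, Cdiv; ring).
  apply Cderiv_scal, Cderiv_plus; [apply Cderiv_cexp|apply Cderiv_cexp_opp].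
Qed.

Lemma Cderiv_csinh (z : C) : Cderiv csinh z (ccosh z).
Proof.
  apply (Cderiv_ext (fun x => / 2 * (cexp x - cexp (- x)))%C).
  { intros x. unfold csinh, Cdiv. ring. }
  replace (ccosh z) with (/ 2 * (cexp z - - cexp (- z)))%C by (unfold ccosh, Cdiv; ring).
  apply Cderiv_scal, Cderiv_minus; [apply Cderiv_cexp|apply Cderiv_cexp_opp].
Qed.

Lemma ccosh_0 : ccosh 0 = 1.
Proof. unfold ccosh. replace (- 0)%C with (RtoC 0) by ring. rewrite cexp_0. field. Qed.

Definition f0_derivs (n : nat) (z : C) : C :=
  match n with
  | O => f0 z
  | S m => if Nat.even m then (10 * csinh z)%C else (10 * ccosh z)%C
  end.

Lemma derivs_on_f0 : derivs_on Cplane f0 f0_derivs.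
Proof.
  split; [reflexivity|]. intros n z _. destruct n as [|m].
  - unfold f0. replace (f0_derivs 1 z) with (10 * csinh z - 0)%C by (simpl; ring).
    apply Cderiv_minus; [apply Cderiv_scal, Cderiv_ccosh|apply Cderiv_const].
  - unfold f0_derivs. rewrite Nat.even_succ, <- Nat.negb_even.
    destruct (Nat.even m); simpl; apply Cderiv_scal; [apply Cderiv_csinh|apply Cderiv_ccosh].
Qed.

Lemma f0_derivs_0_0 : f0_derivs 0 0 = RtoC (-2).
Proof.
  simpl. unfold f0. rewrite ccosh_0. unfold RtoC, Cminus, Cmult, Copp, Cplus; simpl. f_equal; ring.
Qed.

Lemma f0_derivs_even_0 (k : nat) : f0_derivs (2 * S k) 0 = 10.
Proof.
  replace (2 * S k)%nat with (S (S (2 * k))) by lia.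
  unfold f0_derivs. rewrite Nat.even_succ, Nat.odd_mul, ccosh_0. simpl. ring.
Qed.

(** * Curves in the complex plane *)

Definition curve_deriv (g : R -> C) (t : R) (l : C) : Prop :=
  forall eps, 0 < eps -> exists del, 0 < del /\ forall s, Rabs (s - t) < del ->
    Cmod (g s - g t - RtoC (s - t) * l) <= eps * Rabs (s - t).

Definition curve_derivable (g : R -> C) : Prop := forall t, exists l, curve_deriv g t l.

Lemma curve_deriv_component (p : C -> R) (g : R -> C) (t : R) (l : C) :
  (forall a b c (r : R), p (a - b - r * c)%C = p a - p b - r * p c) ->
  (forall c, Rabs (p c) <= Cmod c) ->
  curve_deriv g t l -> is_derive (fun s => p (g s)) t (p l).
Proof.
  intros Hlin Hle H. apply is_derive_Reals. intros eps Heps.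
  destruct (H (eps / 2)) as [d [Hd H']]; [lra|]. exists (mkposreal d Hd). intros h Hh Hhd.
  specialize (H' (t + h)). replace (t + h - t) with h in H' by ring.
  specialize (H' Hhd). pose proof (Hle (g (t + h)%R - g t - h * l)%C) as Hp. rewrite Hlin in Hp.
  replace ((p (g (t + h)) - p (g t)) / h - p l) with ((p (g (t + h)) - p (g t) - h * p l) / h)
    by (field; auto).
  unfold Rdiv. rewrite Rabs_mult, Rabs_inv.
  apply (Rmult_lt_reg_r (Rabs h)); [apply Rabs_pos_lt; auto|].
  rewrite Rmult_assoc, Rinv_l by (apply Rabs_no_R0; auto). pose proof (Rabs_pos_lt h Hh). nra.
Qed.

Lemma curve_deriv_Re (g : R -> C) (t : R) (l : C) :
  curve_deriv g t l -> is_derive (fun s => Re (g s)) t (Re l).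
Proof.
  apply curve_deriv_component; [|apply re_le_Cmod].
  intros [a1 a2] [b1 b2] [c1 c2] r. simpl. ring.
Qed.

Lemma curve_deriv_Im (g : R -> C) (t : R) (l : C) :
  curve_deriv g t l -> is_derive (fun s => Im (g s)) t (Im l).
Proof.
  apply curve_deriv_component; [|apply im_le_Cmod].
  intros [a1 a2] [b1 b2] [c1 c2] r. simpl. ring.
Qed.

Lemma curve_deriv_of_Re_Im (g : R -> C) (t : R) (l : C) :
  is_derive (fun s => Re (g s)) t (Re l) -> is_derive (fun s => Im (g s)) t (Im l) ->
  curve_deriv g t l.
Proof.
  intros H1 H2 eps Heps. apply is_derive_Reals in H1, H2.
  destruct (H1 (eps / 2)) as [d1 H1']; [lra|]. destruct (H2 (eps / 2)) as [d2 H2']; [lra|].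
  exists (Rmin d1 d2). split; [apply Rmin_pos; apply cond_pos|].
  intros s Hs. destruct (Req_dec s t) as [->|Hne].
  - rewrite Rminus_diag, Rabs_R0, Rmult_0_r.
    replace (g t - g t - RtoC 0 * l)%C with (RtoC 0) by ring. rewrite Cmod_0. lra.
  - set (h := s - t). assert (Hh : h <> 0) by (unfold h; lra).
    specialize (H1' h Hh (Rlt_le_trans _ _ _ Hs (Rmin_l _ _))).
    specialize (H2' h Hh (Rlt_le_trans _ _ _ Hs (Rmin_r _ _))).
    replace (t + h) with s in H1', H2' by (unfold h; ring).
    eapply Rle_trans; [apply Cmod_le_Re_Im|]. fold h.
    replace (Re (g s - g t - h * l)%C) with (((Re (g s) - Re (g t)) / h - Re l) * h)
      by (destruct (g s), (g t), l; simpl; field; auto).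
    replace (Im (g s - g t - h * l)%C) with (((Im (g s) - Im (g t)) / h - Im l) * h)
      by (destruct (g s), (g t), l; simpl; field; auto).
    rewrite !Rabs_mult. pose proof (Rabs_pos h). nra.
Qed.

Lemma curve_deriv_ext (g h : R -> C) (t : R) (l : C) :
  (forall s, g s = h s) -> curve_deriv g t l -> curve_deriv h t l.
Proof.
  intros E H eps Heps. destruct (H eps Heps) as [d [Hd H']]. exists d; split; auto.
  intros s Hs. rewrite <- !E. auto.
Qed.

Lemma curve_deriv_const (c : C) (t : R) : curve_deriv (fun _ => c) t 0.
Proof.
  intros eps Heps. exists 1; split; [lra|]. intros s _.
  replace (c - c - RtoC (s - t) * 0)%C with (RtoC 0) by ring.
  rewrite Cmod_0. pose proof (Rabs_pos (s - t)). nra.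
Qed.

Lemma curve_deriv_line (p v : C) (t : R) : curve_deriv (fun s => p + RtoC s * v)%C t v.
Proof.
  intros eps Heps. exists 1; split; [lra|]. intros s _.
  replace (p + RtoC s * v - (p + RtoC t * v) - RtoC (s - t) * v)%C with (RtoC 0)
    by (unfold RtoC, Cminus, Cplus, Cmult, Copp; simpl; f_equal; ring).
  rewrite Cmod_0. pose proof (Rabs_pos (s - t)). nra.
Qed.

Lemma curve_deriv_plus (g h : R -> C) (t : R) (a b : C) :
  curve_deriv g t a -> curve_deriv h t b -> curve_deriv (fun s => g s + h s)%C t (a + b)%C.
Proof.
  intros Hg Hh. apply curve_deriv_of_Re_Im.
  - apply (is_derive_plus (fun s => Re (g s)) (fun s => Re (h s)));
      apply curve_deriv_Re; assumption.
  - apply (is_derive_plus (fun s => Im (g s)) (fun s => Im (h s)));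
      apply curve_deriv_Im; assumption.
Qed.

Lemma curve_deriv_mult (g h : R -> C) (t : R) (a b : C) :
  curve_deriv g t a -> curve_deriv h t b ->
  curve_deriv (fun s => g s * h s)%C t (a * h t + g t * b)%C.
Proof.
  intros Hg Hh.
  pose proof (curve_deriv_Re _ _ _ Hg) as A1. pose proof (curve_deriv_Im _ _ _ Hg) as A2.
  pose proof (curve_deriv_Re _ _ _ Hh) as B1. pose proof (curve_deriv_Im _ _ _ Hh) as B2.
  apply curve_deriv_of_Re_Im.
  - eapply is_derive_ext; [intros s; symmetry; apply re_mult|].
    pose proof (is_derive_minus _ _ _ _ _ (is_derive_mult _ _ _ _ _ A1 B1 Rmult_comm)
                  (is_derive_mult _ _ _ _ _ A2 B2 Rmult_comm)) as K.
    replace (Re (a * h t + g t * b)%C) with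
      (minus (plus (mult (Re a) (Re (h t))) (mult (Re (g t)) (Re b)))
             (plus (mult (Im a) (Im (h t))) (mult (Im (g t)) (Im b)))); [exact K|].
    destruct a, b, (g t), (h t). unfold minus, plus, opp, mult; simpl. ring.
  - eapply is_derive_ext; [intros s; symmetry; apply im_mult|].
    pose proof (is_derive_plus _ _ _ _ _ (is_derive_mult _ _ _ _ _ A1 B2 Rmult_comm)
                  (is_derive_mult _ _ _ _ _ A2 B1 Rmult_comm)) as K.
    replace (Im (a * h t + g t * b)%C) with
      (plus (plus (mult (Re a) (Im (h t))) (mult (Re (g t)) (Im b)))
            (plus (mult (Im a) (Re (h t))) (mult (Im (g t)) (Re b)))); [exact K|].
    destruct a, b, (g t), (h t). unfold plus, mult; simpl. ring.
Qed.

Lemma curve_deriv_scal (c : C) (g : R -> C) (t : R) (a : C) :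
  curve_deriv g t a -> curve_deriv (fun s => c * g s)%C t (c * a)%C.
Proof.
  intros H. replace (c * a)%C with (0 * g t + c * a)%C by ring.
  exact (curve_deriv_mult (fun _ => c) g t 0 a (curve_deriv_const c t) H).
Qed.

Lemma curve_deriv_comp (f : C -> C) (g : R -> C) (t : R) (l m : C) :
  Cderiv f (g t) l -> curve_deriv g t m -> curve_deriv (fun s => f (g s)) t (m * l)%C.
Proof.
  intros Hf Hg eps Heps.
  set (Km := Cmod m + 1). set (Kl := Cmod l + 1).
  assert (HKm : 0 < Km) by (unfold Km; pose proof (Cmod_ge_0 m); lra).
  assert (HKl : 0 < Kl) by (unfold Kl; pose proof (Cmod_ge_0 l); lra).
  destruct (proj1 (Cderiv_iff f (g t) l) Hf (eps / (2 * Km))) as [d1 [Hd1 H1]].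
  { apply Rdiv_lt_0_compat; lra. }
  destruct (Hg 1 Rlt_0_1) as [d2 [Hd2 H2]].
  destruct (Hg (eps / (2 * Kl))) as [d3 [Hd3 H3]]; [apply Rdiv_lt_0_compat; lra|].
  exists (Rmin (Rmin d2 d3) (d1 / Km)).
  split; [repeat apply Rmin_pos; auto; apply Rdiv_lt_0_compat; lra|].
  intros s Hs.
  pose proof (Rmin_l (Rmin d2 d3) (d1 / Km)). pose proof (Rmin_r (Rmin d2 d3) (d1 / Km)).
  pose proof (Rmin_l d2 d3). pose proof (Rmin_r d2 d3).
  specialize (H2 s ltac:(lra)). specialize (H3 s ltac:(lra)).
  set (u := (g s - g t)%C) in *.
  assert (Hu : Cmod u <= Km * Rabs (s - t)).
  { replace u with ((u - RtoC (s - t) * m) + RtoC (s - t) * m)%C by ring.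
    eapply Rle_trans; [apply Cmod_triangle|]. rewrite Cmod_RtoC_mult. unfold Km. lra. }
  assert (Hu1 : Cmod (g s - g t) < d1).
  { fold u. eapply Rle_lt_trans; [exact Hu|].
    apply (Rmult_lt_reg_r (/ Km)); [apply Rinv_0_lt_compat; lra|].
    rewrite Rmult_comm, <- Rmult_assoc, Rinv_l, Rmult_1_l by lra. lra. }
  specialize (H1 (g s) Hu1). fold u in H1.
  replace (f (g s) - f (g t) - RtoC (s - t) * (m * l))%C
    with ((f (g s) - f (g t) - u * l) + (u - RtoC (s - t) * m) * l)%C by (unfold u; ring).
  eapply Rle_trans; [apply Cmod_triangle|]. rewrite Cmod_mult.
  assert (A1 : eps / (2 * Km) * Cmod u <= eps / 2 * Rabs (s - t)).
  { replace (eps / 2 * Rabs (s - t)) with (eps / (2 * Km) * (Km * Rabs (s - t))) by (field; lra).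
    apply Rmult_le_compat_l; auto. left; apply Rdiv_lt_0_compat; lra. }
  assert (A2 : Cmod (u - RtoC (s - t) * m) * Cmod l <= eps / 2 * Rabs (s - t)).
  { eapply Rle_trans; [apply Rmult_le_compat_r; [apply Cmod_ge_0|exact H3]|].
    replace (eps / 2 * Rabs (s - t)) with (eps / (2 * Kl) * Rabs (s - t) * Kl) by (field; lra).
    pose proof (Rabs_pos (s - t)). assert (0 < eps / (2 * Kl)) by (apply Rdiv_lt_0_compat; lra).
    apply Rmult_le_compat_l; [nra|]. unfold Kl; lra. }
  lra.
Qed.

Lemma curve_derivable_Re (g : R -> C) (t : R) :
  curve_derivable g -> continuous (fun s => Re (g s)) t.
Proof.
  intros H. destruct (H t) as [l Hl].
  apply (ex_derive_continuous (fun s => Re (g s))). exists (Re l). apply curve_deriv_Re, Hl.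
Qed.

Lemma curve_derivable_Im (g : R -> C) (t : R) :
  curve_derivable g -> continuous (fun s => Im (g s)) t.
Proof.
  intros H. destruct (H t) as [l Hl].
  apply (ex_derive_continuous (fun s => Im (g s))). exists (Im l). apply curve_deriv_Im, Hl.
Qed.

Lemma curve_derivable_ext (g h : R -> C) :
  (forall s, g s = h s) -> curve_derivable g -> curve_derivable h.
Proof. intros E H t. destruct (H t) as [l Hl]. exists l. apply (curve_deriv_ext g); auto. Qed.

Lemma curve_derivable_plus (g h : R -> C) :
  curve_derivable g -> curve_derivable h -> curve_derivable (fun s => g s + h s)%C.
Proof.
  intros Hg Hh t. destruct (Hg t) as [a Ha], (Hh t) as [b Hb].
  exists (a + b)%C. apply curve_deriv_plus; auto.
Qed.

Lemma curve_derivable_mult (g h : R -> C) :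
  curve_derivable g -> curve_derivable h -> curve_derivable (fun s => g s * h s)%C.
Proof.
  intros Hg Hh t. destruct (Hg t) as [a Ha], (Hh t) as [b Hb].
  eexists. apply curve_deriv_mult; eauto.
Qed.

Lemma curve_derivable_scal (c : C) (g : R -> C) :
  curve_derivable g -> curve_derivable (fun s => c * g s)%C.
Proof. intros H t. destruct (H t) as [a Ha]. eexists. apply curve_deriv_scal; eauto. Qed.

Lemma curve_derivable_minus (g h : R -> C) :
  curve_derivable g -> curve_derivable h -> curve_derivable (fun s => g s - h s)%C.
Proof.
  intros Hg Hh. apply (curve_derivable_ext (fun s => g s + (-1) * h s)%C); [intros; ring|].
  apply curve_derivable_plus, curve_derivable_scal; auto.
Qed.

Lemma curve_deriv_0_const (j : R -> C) (r : R) :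
  (forall t, curve_deriv j t 0) -> j r = j 0.
Proof.
  intros HD.
  destruct (MVT_gen (fun t => Re (j t)) 0 r (fun _ => 0)) as [c1 [_ M1]].
  { intros t _. apply (curve_deriv_Re _ _ _ (HD t)). }
  { intros t _. eapply is_derive_continuity_pt, (curve_deriv_Re _ _ _ (HD t)). }
  destruct (MVT_gen (fun t => Im (j t)) 0 r (fun _ => 0)) as [c2 [_ M2]].
  { intros t _. apply (curve_deriv_Im _ _ _ (HD t)). }
  { intros t _. eapply is_derive_continuity_pt, (curve_deriv_Im _ _ _ (HD t)). }
  destruct (j r) as [a b], (j 0) as [a' b']. simpl in M1, M2. f_equal; lra.
Qed.

(** Twice the real bound, since [C] is estimated through its real and imaginary parts. *)
Lemma Taylor2_curve_le (g g1 g2 : R -> C) (x y M : R) :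
  (forall t, curve_deriv g t (g1 t)) -> (forall t, curve_deriv g1 t (g2 t)) ->
  (forall t, Rmin x y <= t <= Rmax x y -> Cmod (g2 t) <= M) ->
  Cmod (g y - g x - RtoC (y - x) * g1 x) <= 2 * M * (y - x) ^ 2.
Proof.
  intros H1 H2 Hb.
  pose proof (Taylor2_abs_le (fun t => Re (g t)) (fun t => Re (g1 t)) (fun t => Re (g2 t)) x y M
    (fun t => curve_deriv_Re _ _ _ (H1 t)) (fun t => curve_deriv_Re _ _ _ (H2 t))) as T1.
  pose proof (Taylor2_abs_le (fun t => Im (g t)) (fun t => Im (g1 t)) (fun t => Im (g2 t)) x y M
    (fun t => curve_deriv_Im _ _ _ (H1 t)) (fun t => curve_deriv_Im _ _ _ (H2 t))) as T2.
  eapply Rle_trans; [apply Cmod_le_Re_Im|].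
  replace (Re (g y - g x - RtoC (y - x) * g1 x)%C) with (Re (g y) - Re (g x) - Re (g1 x) * (y - x))
    by (destruct (g y), (g x), (g1 x); simpl; ring).
  replace (Im (g y - g x - RtoC (y - x) * g1 x)%C) with (Im (g y) - Im (g x) - Im (g1 x) * (y - x))
    by (destruct (g y), (g x), (g1 x); simpl; ring).
  assert (A1 : Rabs (Re (g y) - Re (g x) - Re (g1 x) * (y - x)) <= M * (y - x) ^ 2).
  { apply T1. intros t Ht. eapply Rle_trans; [apply re_le_Cmod|apply Hb; auto]. }
  assert (A2 : Rabs (Im (g y) - Im (g x) - Im (g1 x) * (y - x)) <= M * (y - x) ^ 2).
  { apply T2. intros t Ht. eapply Rle_trans; [apply im_le_Cmod|apply Hb; auto]. }
  lra.
Qed.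

Definition cis (x : R) : C := (cos x, sin x).

Lemma cis_plus (x y : R) : cis (x + y) = (cis x * cis y)%C.
Proof. unfold cis, Cmult; simpl. rewrite cos_plus, sin_plus. f_equal; ring. Qed.

Lemma cis_0 : cis 0 = 1.
Proof. unfold cis. rewrite cos_0, sin_0. reflexivity. Qed.

Lemma cis_2PI : cis (2 * PI) = 1.
Proof. unfold cis. rewrite cos_2PI, sin_2PI. reflexivity. Qed.

Lemma cis_opp_2PI_mult (k : nat) : cis (- INR k * (2 * PI)) = 1.
Proof.
  unfold cis. replace (- INR k * (2 * PI)) with (- (0 + 2 * INR k * PI)) by ring.
  rewrite cos_neg, sin_neg, cos_period, sin_period, cos_0, sin_0. unfold RtoC. f_equal; ring.
Qed.

Lemma Cmod_cis (x : R) : Cmod (cis x) = 1.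
Proof.
  unfold cis, Cmod; simpl. pose proof (sin2_cos2 x) as H. unfold Rsqr in H.
  replace (cos x * (cos x * 1) + sin x * (sin x * 1)) with 1 by nra. apply sqrt_1.
Qed.

Lemma curve_deriv_cis_scal (c t : R) :
  curve_deriv (fun s => cis (c * s)) t (c * Ci * cis (c * t))%C.
Proof.
  assert (Hlin : forall s, is_derive (fun s => c * s) s c).
  { intros s. pose proof (is_derive_scal (fun s => s) s c 1 (is_derive_id s)) as H.
    rewrite Rmult_1_r in H. exact H. }
  apply curve_deriv_of_Re_Im; unfold cis; simpl.
  - replace (c * 0 - 0 * 1) with 0 by ring.
    replace (0 * cos (c * t) - (c * 1 + 0 * 0) * sin (c * t)) with (c * - sin (c * t)) by ring.
    apply (is_derive_comp cos (fun s => c * s)); [apply is_derive_cos|apply Hlin].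
  - replace (c * 0 - 0 * 1) with 0 by ring.
    replace (0 * sin (c * t) + (c * 1 + 0 * 0) * cos (c * t)) with (c * cos (c * t)) by ring.
    apply (is_derive_comp sin (fun s => c * s)); [apply is_derive_sin|apply Hlin].
Qed.

Lemma curve_deriv_cis (t : R) : curve_deriv cis t (Ci * cis t)%C.
Proof.
  apply (curve_deriv_ext (fun s => cis (1 * s))); [intros s; rewrite Rmult_1_l; reflexivity|].
  replace (Ci * cis t)%C with (1 * Ci * cis (1 * t))%C by (rewrite Rmult_1_l; ring).
  apply curve_deriv_cis_scal.
Qed.

Lemma curve_derivable_cis_scal (c : R) : curve_derivable (fun s => cis (c * s)).
Proof. intros t. eexists. apply curve_deriv_cis_scal. Qed.

Lemma curve_derivable_cis : curve_derivable cis.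
Proof. intros t. eexists. apply curve_deriv_cis. Qed.

Definition CRInt_2PI (g : R -> C) : C :=
  (RInt (fun s => Re (g s)) 0 (2 * PI), RInt (fun s => Im (g s)) 0 (2 * PI)).

Lemma ex_RInt_Re_2PI (g : R -> C) : curve_derivable g -> ex_RInt (fun s => Re (g s)) 0 (2 * PI).
Proof.
  intros H. apply (@ex_RInt_continuous R_CompleteNormedModule).
  intros; apply curve_derivable_Re, H.
Qed.

Lemma ex_RInt_Im_2PI (g : R -> C) : curve_derivable g -> ex_RInt (fun s => Im (g s)) 0 (2 * PI).
Proof.
  intros H. apply (@ex_RInt_continuous R_CompleteNormedModule).
  intros; apply curve_derivable_Im, H.
Qed.

Lemma CRInt_2PI_ext (g h : R -> C) : (forall t, g t = h t) -> CRInt_2PI g = CRInt_2PI h.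
Proof. intros H. f_equal. apply functional_extensionality. auto. Qed.

Lemma CRInt_2PI_plus (g h : R -> C) : curve_derivable g -> curve_derivable h ->
  CRInt_2PI (fun s => g s + h s)%C = (CRInt_2PI g + CRInt_2PI h)%C.
Proof.
  intros Hg Hh. unfold CRInt_2PI, Cplus; simpl. f_equal.
  - exact (RInt_plus (V := R_CompleteNormedModule) _ _ 0 (2 * PI)
             (ex_RInt_Re_2PI g Hg) (ex_RInt_Re_2PI h Hh)).
  - exact (RInt_plus (V := R_CompleteNormedModule) _ _ 0 (2 * PI)
             (ex_RInt_Im_2PI g Hg) (ex_RInt_Im_2PI h Hh)).
Qed.

Lemma CRInt_2PI_scal (c : C) (g : R -> C) : curve_derivable g ->
  CRInt_2PI (fun s => c * g s)%C = (c * CRInt_2PI g)%C.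
Proof.
  intros Hg. pose proof (ex_RInt_Re_2PI g Hg) as E1. pose proof (ex_RInt_Im_2PI g Hg) as E2.
  assert (Hscal : forall a (u : R -> R), ex_RInt u 0 (2 * PI) ->
            ex_RInt (fun s => a * u s) 0 (2 * PI) /\
            RInt (fun s => a * u s) 0 (2 * PI) = a * RInt u 0 (2 * PI)).
  { intros a u Hu. split.
    - exact (ex_RInt_scal (V := R_CompleteNormedModule) u 0 (2 * PI) a Hu).
    - exact (RInt_scal (V := R_CompleteNormedModule) u 0 (2 * PI) a Hu). }
  destruct c as [a b]. unfold CRInt_2PI, Cmult; simpl.
  destruct (Hscal a _ E1) as [Xa1 Ra1], (Hscal b _ E1) as [Xb1 Rb1].
  destruct (Hscal a _ E2) as [Xa2 Ra2], (Hscal b _ E2) as [Xb2 Rb2].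
  f_equal.
  - rewrite <- Ra1, <- Rb2.
    exact (RInt_minus (V := R_CompleteNormedModule) _ _ 0 (2 * PI) Xa1 Xb2).
  - rewrite <- Ra2, <- Rb1.
    exact (RInt_plus (V := R_CompleteNormedModule) _ _ 0 (2 * PI) Xa2 Xb1).
Qed.

Lemma CRInt_2PI_minus (g h : R -> C) : curve_derivable g -> curve_derivable h ->
  CRInt_2PI (fun s => g s - h s)%C = (CRInt_2PI g - CRInt_2PI h)%C.
Proof.
  intros Hg Hh. rewrite (CRInt_2PI_ext _ (fun s => g s + (-1) * h s)%C) by (intros; ring).
  rewrite CRInt_2PI_plus, CRInt_2PI_scal; auto; [ring|]. apply curve_derivable_scal, Hh.
Qed.

Lemma CRInt_2PI_const (c : C) : CRInt_2PI (fun _ => c) = (2 * PI * c)%C.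
Proof.
  unfold CRInt_2PI. rewrite !RInt_const. destruct c as [a b].
  unfold Cmult, RtoC, scal; simpl. unfold mult; simpl. f_equal; ring.
Qed.

Lemma Cmod_CRInt_2PI_le (g : R -> C) (B : R) : curve_derivable g ->
  (forall t, 0 <= t <= 2 * PI -> Cmod (g t) <= B) -> Cmod (CRInt_2PI g) <= 4 * PI * B.
Proof.
  intros Hg Hb. unfold CRInt_2PI. eapply Rle_trans; [apply Cmod_le_Re_Im|]. simpl.
  pose proof PI_RGT_0.
  assert (A1 : Rabs (RInt (fun s => Re (g s)) 0 (2 * PI)) <= (2 * PI - 0) * B).
  { apply abs_RInt_le_const; [lra|apply ex_RInt_Re_2PI; auto|].
    intros t Ht. eapply Rle_trans; [apply re_le_Cmod|auto]. }
  assert (A2 : Rabs (RInt (fun s => Im (g s)) 0 (2 * PI)) <= (2 * PI - 0) * B).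
  { apply abs_RInt_le_const; [lra|apply ex_RInt_Im_2PI; auto|].
    intros t Ht. eapply Rle_trans; [apply im_le_Cmod|auto]. }
  lra.
Qed.

Lemma CRInt_2PI_deriv (G G' : R -> C) :
  (forall t, curve_deriv G t (G' t)) -> curve_derivable G' ->
  CRInt_2PI G' = (G (2 * PI)%R - G 0)%C.
Proof.
  intros HD Hc. unfold CRInt_2PI.
  rewrite (is_RInt_unique (fun s => Re (G' s)) 0 (2 * PI) (minus (Re (G (2 * PI))) (Re (G 0)))).
  rewrite (is_RInt_unique (fun s => Im (G' s)) 0 (2 * PI) (minus (Im (G (2 * PI))) (Im (G 0)))).
  - destruct (G (2 * PI)), (G 0). unfold minus, plus, opp; simpl. reflexivity.
  - apply (is_RInt_derive (fun s => Im (G s))).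
    + intros; apply curve_deriv_Im, HD.
    + intros; apply curve_derivable_Im, Hc.
  - apply (is_RInt_derive (fun s => Re (G s))).
    + intros; apply curve_deriv_Re, HD.
    + intros; apply curve_derivable_Re, Hc.
Qed.

Lemma CRInt_2PI_cis : CRInt_2PI cis = 0.
Proof.
  assert (H : forall t, curve_deriv (fun s => - Ci * cis s)%C t (cis t)).
  { intros t. replace (cis t) with (- Ci * (Ci * cis t))%C
      by (unfold Ci, cis, Cmult, Copp; simpl; f_equal; ring).
    apply curve_deriv_scal, curve_deriv_cis. }
  rewrite (CRInt_2PI_deriv _ _ H curve_derivable_cis), cis_2PI, cis_0. ring.
Qed.

(** * Compactness of closed disks *)

Lemma disk_cover_gauge (c : C) (r : R) (I : Type) (O : I -> C -> Prop) :
  (forall i, openC (O i)) -> (forall z, Cmod (z - c) <= r -> exists i, O i z) ->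
  forall p, exists d : posreal,
    (Cmod (p - c) <= r -> exists i, forall y, Cmod (y - p) < 2 * d -> O i y) /\
    (r < Cmod (p - c) -> forall y, Cmod (y - p) < 2 * d -> r < Cmod (y - c)).
Proof.
  intros Hopen Hcov p. destruct (Rle_or_lt (Cmod (p - c)) r) as [Hp|Hp].
  - destruct (Hcov p Hp) as [i Hi]. destruct (Hopen i p Hi) as [e [He He']].
    exists (mkposreal (e / 2) ltac:(lra)). split; [|intros; lra].
    intros _. exists i. intros y Hy. apply He'. simpl in Hy. lra.
  - exists (mkposreal ((Cmod (p - c) - r) / 2) ltac:(lra)). split; [intros; lra|].
    intros _ y Hy. simpl in Hy. pose proof (Cmod_triangle_minus p y c).
    rewrite Cmod_minus_sym in Hy. lra.
Qed.

Lemma compact_disk (c : C) (r : R) : compactC (fun z => Cmod (z - c) <= r).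
Proof.
  intros I O Hopen Hcov.
  destruct (Rlt_or_le r 0) as [Hr|Hr].
  { exists nil. intros z Hz. pose proof (Cmod_ge_0 (z - c)). lra. }
  destruct (Hcov c) as [i0 _]; [rewrite Cminus_diag, Cmod_0; lra|].
  set (good := fun p (d : posreal) =>
    (Cmod (p - c) <= r -> exists i, forall y, Cmod (y - p) < 2 * d -> O i y) /\
    (r < Cmod (p - c) -> forall y, Cmod (y - p) < 2 * d -> r < Cmod (y - c))).
  set (delta := fun p => epsilon (inhabits (mkposreal 1 Rlt_0_1)) (good p)).
  assert (Hdelta : forall p, good p (delta p)).
  { intros p. apply epsilon_spec, (disk_cover_gauge c r I O Hopen Hcov). }
  set (idx := fun p => epsilon (inhabits i0) (fun i => forall y, Cmod (y - p) < 2 * delta p -> O i y)).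
  set (toC := fun t : Compactness.Tn 2 R => (fst t, fst (snd t)) : C).
  pose proof (compactness_list 2 (fst c - r, (snd c - r, tt)) (fst c + r, (snd c + r, tt))
    (fun t => delta (toC t))) as HL.
  apply NNPP. intros Hn. apply HL. intros [l Hl]. apply Hn.
  exists (map (fun t => idx (toC t)) l). intros z Hz.
  destruct (Hl (fst z, (snd z, tt))) as [t [Ht1 [Ht2 Ht3]]].
  { simpl. pose proof (re_le_Cmod (z - c)). pose proof (im_le_Cmod (z - c)).
    destruct z, c. simpl in *. unfold Rabs in *. repeat destruct Rcase_abs; repeat split; lra. }
  destruct t as [t1 [t2 []]]. simpl in Ht3. unfold toC in *; simpl in *.
  set (p := (t1, t2) : C) in *.
  assert (Hzp : Cmod (z - p) < 2 * delta p).
  { eapply Rle_lt_trans; [apply Cmod_le_Re_Im|].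
    replace (Re (z - p)) with (fst z - t1) by (unfold p; destruct z; simpl; ring).
    replace (Im (z - p)) with (snd z - t2) by (unfold p; destruct z; simpl; ring).
    destruct Ht3 as [A [B _]]. lra. }
  destruct (Hdelta p) as [G1 G2].
  destruct (Rle_or_lt (Cmod (p - c)) r) as [Hp|Hp].
  - exists (idx p). split.
    + apply in_map_iff. exists (t1, (t2, tt)). split; auto.
    + apply (epsilon_spec (inhabits i0) (fun i => forall y, Cmod (y - p) < 2 * delta p -> O i y));
        auto.
  - exfalso. specialize (G2 Hp z Hzp). lra.
Qed.

Lemma fold_right_Rmax_ge {A : Type} (g : A -> R) (l : list A) (x : A) :
  In x l -> g x <= fold_right Rmax 0 (map g l).
Proof.
  induction l as [|a l IH]; simpl; [tauto|]. intros [->|H].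
  - apply Rmax_l.
  - eapply Rle_trans; [apply IH; auto|apply Rmax_r].
Qed.

Lemma Ccont_bounded_on_disk (f : C -> C) (c : C) (r : R) : (forall z, Ccont f z) ->
  exists M, forall z, Cmod (z - c) <= r -> Cmod (f z) <= M.
Proof.
  intros Hf.
  destruct (compact_disk c r C (fun x y => Cmod (f y) < Cmod (f x) + 1)) as [l Hl].
  - intros x y Hy. destruct (Hf y (Cmod (f x) + 1 - Cmod (f y))) as [d [Hd H]]; [lra|].
    exists d; split; auto. intros y' Hy'. specialize (H y' Hy').
    pose proof (Cmod_triangle_minus (f y') (f y) 0). rewrite !Cminus_0_r in H0. lra.
  - intros z _. exists z. lra.
  - exists (fold_right Rmax 0 (map (fun x => Cmod (f x) + 1) l)). intros z Hz.
    destruct (Hl z Hz) as [x [Hx1 Hx2]].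
    pose proof (fold_right_Rmax_ge (fun x => Cmod (f x) + 1) l x Hx1). simpl in *. lra.
Qed.

(** * Cauchy estimates *)

Definition circle (w : C) (r t : R) : C := (w + r * cis t)%C.

Definition circle_integral (psi : C -> C) (w : C) (r : R) : C :=
  CRInt_2PI (fun t => psi (circle w r t)).

Definition circle_coef (psi : C -> C) (w : C) (r : R) (k : nat) : C :=
  CRInt_2PI (fun t => psi (circle w r t) * cis (- INR k * t))%C.

Lemma circle_2PI (w : C) (r : R) : circle w r (2 * PI) = circle w r 0.
Proof. unfold circle. rewrite cis_2PI, cis_0. reflexivity. Qed.

Lemma circle_0_radius (w : C) (t : R) : circle w 0 t = w.
Proof. unfold circle. ring. Qed.

Lemma Cmod_circle_sub (w : C) (r t : R) : Cmod (circle w r t - w) = Rabs r.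
Proof.
  unfold circle. replace (w + r * cis t - w)%C with (r * cis t)%C by ring.
  rewrite Cmod_RtoC_mult, Cmod_cis. ring.
Qed.

Lemma circle_coef_0 (psi : C -> C) (w : C) (r : R) : circle_coef psi w r 0 = circle_integral psi w r.
Proof.
  apply CRInt_2PI_ext. intros t. simpl INR. rewrite Ropp_0, Rmult_0_l, cis_0. ring.
Qed.

Lemma curve_deriv_circle (w : C) (r t : R) : curve_deriv (circle w r) t (r * (Ci * cis t))%C.
Proof.
  replace (r * (Ci * cis t))%C with (0 + r * (Ci * cis t))%C by ring.
  apply curve_deriv_plus; [apply curve_deriv_const|apply curve_deriv_scal, curve_deriv_cis].
Qed.

Section CauchyEstimates.

Variable D : nat -> C -> C.
Hypothesis HD : forall n z, Cderiv (D n) z (D (S n) z).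

Lemma curve_deriv_D_circle (w : C) (r : R) (m : nat) (t : R) :
  curve_deriv (fun s => D m (circle w r s)) t (r * (Ci * cis t) * D (S m) (circle w r t))%C.
Proof. apply curve_deriv_comp; [apply HD|apply curve_deriv_circle]. Qed.

Lemma curve_derivable_D_circle (w : C) (r : R) (m : nat) :
  curve_derivable (fun s => D m (circle w r s)).
Proof. intros t. eexists. apply curve_deriv_D_circle. Qed.

Lemma curve_derivable_circle_coef (w : C) (r : R) (m : nat) (c : R) :
  curve_derivable (fun t => D m (circle w r t) * cis (c * t))%C.
Proof. apply curve_derivable_mult; [apply curve_derivable_D_circle|apply curve_derivable_cis_scal]. Qed.

(** Integration by parts, the boundary terms cancelling by periodicity. *)
Lemma circle_coef_succ (w : C) (r : R) (m k : nat) :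
  (INR (S k) * circle_coef (D m) w r (S k))%C = (r * circle_coef (D (S m)) w r k)%C.
Proof.
  set (A := fun t => (D (S m) (circle w r t) * cis (- INR k * t))%C).
  set (B := fun t => (D m (circle w r t) * cis (- INR (S k) * t))%C).
  assert (HA : curve_derivable A) by apply curve_derivable_circle_coef.
  assert (HB : curve_derivable B) by apply curve_derivable_circle_coef.
  set (B' := fun t => (r * Ci * A t + RtoC (- INR (S k)) * Ci * B t)%C).
  assert (HB' : forall t, curve_deriv B t (B' t)).
  { intros t. unfold B.
    replace (B' t) with (r * (Ci * cis t) * D (S m) (circle w r t) * cis (- INR (S k) * t)
                         + D m (circle w r t) * (RtoC (- INR (S k)) * Ci * cis (- INR (S k) * t)))%C.
    - apply (curve_deriv_mult (fun s => D m (circle w r s)) (fun s => cis (- INR (S k) * s))).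
      + apply curve_deriv_D_circle.
      + apply curve_deriv_cis_scal.
    - unfold B', A, B. replace (- INR k * t) with (t + - INR (S k) * t) by (rewrite S_INR; ring).
      rewrite cis_plus. ring. }
  assert (Hper : (B (2 * PI)%R - B 0)%C = 0).
  { unfold B. rewrite circle_2PI, (cis_opp_2PI_mult (S k)), Rmult_0_r, cis_0. ring. }
  pose proof (CRInt_2PI_deriv B B' HB') as F. rewrite Hper in F.
  unfold B' in F. rewrite CRInt_2PI_plus, !CRInt_2PI_scal in F
    by (auto; try apply curve_derivable_scal; auto).
  unfold circle_coef. fold A B.
  assert (Hi : (Ci * (r * CRInt_2PI A - INR (S k) * CRInt_2PI B))%C = 0).
  { rewrite <- F; [rewrite RtoC_opp; ring|].
    apply curve_derivable_plus; apply curve_derivable_scal; auto. }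
  apply Cmult_integral in Hi as [Hi|Hi]; [exfalso; exact (Ci_nz Hi)|].
  replace (r * CRInt_2PI A)%C
    with (r * CRInt_2PI A - INR (S k) * CRInt_2PI B + INR (S k) * CRInt_2PI B)%C
    by ring.
  rewrite Hi. ring.
Qed.

Lemma CRInt_2PI_cis_mul_D_circle (w : C) (m : nat) (r : R) :
  CRInt_2PI (fun t => cis t * D (S m) (circle w r t))%C = 0.
Proof.
  destruct (Req_dec r 0) as [->|Hr].
  - rewrite (CRInt_2PI_ext _ (fun t => D (S m) w * cis t)%C)
      by (intros; rewrite circle_0_radius; ring).
    rewrite CRInt_2PI_scal, CRInt_2PI_cis by apply curve_derivable_cis. ring.
  - set (K := CRInt_2PI (fun t => cis t * D (S m) (circle w r t))%C).
    assert (H : forall t, curve_deriv (fun s => D m (circle w r s)) t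
                  (r * Ci * (cis t * D (S m) (circle w r t)))%C).
    { intros t.
      replace (r * Ci * (cis t * D (S m) (circle w r t)))%C
        with (r * (Ci * cis t) * D (S m) (circle w r t))%C by ring.
      apply curve_deriv_D_circle. }
    assert (Hint : curve_derivable (fun t => cis t * D (S m) (circle w r t))%C).
    { apply curve_derivable_mult; [apply curve_derivable_cis|apply curve_derivable_D_circle]. }
    pose proof (CRInt_2PI_deriv _ _ H (curve_derivable_scal _ _ Hint)) as F.
    rewrite CRInt_2PI_scal, circle_2PI, Cminus_diag in F by exact Hint. fold K in F.
    apply Cmult_integral in F as [F|F]; auto. exfalso.
    apply Cmult_integral in F as [F|F]; [|exact (Ci_nz F)].
    apply Hr. apply (f_equal Re) in F. exact F.
Qed.

Lemma D_circle_radius_taylor (w : C) (m : nat) (r s t M : R) :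
  (forall z, Cmod (z - w) <= Rabs r + 1 -> Cmod (D (S (S m)) z) <= M) -> Rabs (s - r) <= 1 ->
  Cmod (D m (circle w s t) - D m (circle w r t) - RtoC (s - r) * (cis t * D (S m) (circle w r t)))
    <= 2 * M * (s - r) ^ 2.
Proof.
  intros HM Hs.
  apply (Taylor2_curve_le (fun q => D m (circle w q t)) (fun q => cis t * D (S m) (circle w q t))%C
           (fun q => cis t * (cis t * D (S (S m)) (circle w q t)))%C r s M).
  - intros q. unfold circle. apply curve_deriv_comp; [apply HD|apply curve_deriv_line].
  - intros q. apply curve_deriv_scal. unfold circle.
    apply curve_deriv_comp; [apply HD|apply curve_deriv_line].
  - intros q Hq. rewrite !Cmod_mult, !Cmod_cis, !Rmult_1_l. apply HM. rewrite Cmod_circle_sub.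
    revert Hq Hs. unfold Rmin, Rmax, Rabs.
    repeat destruct Rle_dec; repeat destruct Rcase_abs; intros; lra.
Qed.

Lemma curve_deriv_circle_integral (w : C) (m : nat) (r : R) :
  curve_deriv (fun r => circle_integral (D m) w r) r
    (CRInt_2PI (fun t => cis t * D (S m) (circle w r t))%C).
Proof.
  intros eps Heps.
  destruct (Ccont_bounded_on_disk (D (S (S m))) w (Rabs r + 1)
              (fun z => Cderiv_cont _ _ _ (HD _ z))) as [M HM].
  assert (HMp : 0 <= M).
  { eapply Rle_trans; [apply Cmod_ge_0|apply (HM w)].
    rewrite Cminus_diag, Cmod_0. pose proof (Rabs_pos r). lra. }
  pose proof PI_RGT_0 as Hpi.
  set (d := eps / (8 * PI * M + 1)). assert (Hd : 0 < d) by (apply Rdiv_lt_0_compat; nra).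
  exists (Rmin 1 d). split; [apply Rmin_pos; lra|].
  intros s Hs. pose proof (Rmin_l 1 d). pose proof (Rmin_r 1 d).
  set (P := fun q t => D m (circle w q t)).
  set (Q := fun t => (cis t * D (S m) (circle w r t))%C).
  assert (GP : forall q, curve_derivable (P q)) by (intros; apply curve_derivable_D_circle).
  assert (GQ : curve_derivable Q).
  { apply curve_derivable_mult; [apply curve_derivable_cis|apply curve_derivable_D_circle]. }
  unfold circle_integral. fold (P s) (P r) Q.
  rewrite <- CRInt_2PI_scal, <- !CRInt_2PI_minus
    by (auto; try apply curve_derivable_minus; auto; apply curve_derivable_scal; auto).
  eapply Rle_trans.
  - apply (Cmod_CRInt_2PI_le _ (2 * M * (s - r) ^ 2)).
    + apply curve_derivable_minus; [apply curve_derivable_minus|apply curve_derivable_scal]; auto.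
    + intros t _. apply D_circle_radius_taylor; auto. lra.
  - assert (X : Rabs (s - r) * (8 * PI * M + 1) <= eps).
    { apply (Rmult_le_reg_r (/ (8 * PI * M + 1))); [apply Rinv_0_lt_compat; nra|].
      rewrite Rmult_assoc, Rinv_r, Rmult_1_r by nra. unfold d in *. lra. }
    rewrite <- (pow2_abs (s - r)). pose proof (Rabs_pos (s - r)) as Hp.
    assert (Rabs (s - r) * (Rabs (s - r) * (8 * PI * M + 1)) <= Rabs (s - r) * eps)
      by (apply Rmult_le_compat_l; auto).
    nra.
Qed.

(** Gauss' mean value property: the radial derivative of the circle integral vanishes. *)
Lemma circle_integral_mean_value (w : C) (m : nat) (r : R) :
  circle_integral (D m) w r = (2 * PI * D m w)%C.
Proof.
  rewrite (curve_deriv_0_const (fun r => circle_integral (D m) w r) r).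
  - unfold circle_integral.
    rewrite (CRInt_2PI_ext _ (fun _ => D m w)) by (intros; rewrite circle_0_radius; auto).
    apply CRInt_2PI_const.
  - intros t. pose proof (curve_deriv_circle_integral w m t) as H.
    rewrite CRInt_2PI_cis_mul_D_circle in H. exact H.
Qed.

Lemma circle_coef_formula (w : C) (r : R) (n m : nat) :
  (INR (fact n) * circle_coef (D m) w r n)%C = (RtoC (r ^ n) * (2 * PI * D (m + n)%nat w))%C.
Proof.
  revert m. induction n as [|n IH]; intros m.
  - simpl. rewrite circle_coef_0, circle_integral_mean_value, Nat.add_0_r. ring.
  - rewrite fact_simpl, mult_INR, RtoC_mult.
    replace (INR (S n) * INR (fact n) * circle_coef (D m) w r (S n))%C
      with (INR (fact n) * (INR (S n) * circle_coef (D m) w r (S n)))%C by ring.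
    rewrite circle_coef_succ.
    replace (INR (fact n) * (r * circle_coef (D (S m)) w r n))%C
      with (r * (INR (fact n) * circle_coef (D (S m)) w r n))%C by ring.
    rewrite IH, <- plus_n_Sm, Nat.add_succ_l. simpl pow. rewrite RtoC_mult. ring.
Qed.

Lemma Cauchy_estimate (w : C) (rho M : R) (n : nat) :
  0 < rho -> (forall z, Cmod (z - w) <= rho -> Cmod (D 0 z) <= M) ->
  Cmod (D n w) <= 2 * INR (fact n) * M / rho ^ n.
Proof.
  intros Hr HM. pose proof (circle_coef_formula w rho n 0) as F.
  apply (f_equal Cmod) in F. rewrite !Cmod_mult, !Cmod_R in F.
  assert (B : Cmod (circle_coef (D 0) w rho n) <= 4 * PI * M).
  { apply Cmod_CRInt_2PI_le; [apply curve_derivable_circle_coef|].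
    intros t _. rewrite Cmod_mult, Cmod_cis, Rmult_1_r. apply HM.
    rewrite Cmod_circle_sub, Rabs_right; lra. }
  pose proof PI_RGT_0. pose proof (pow_lt rho n Hr) as Hrn. pose proof (pos_INR (fact n)).
  rewrite Rabs_right in F by (apply Rle_ge, pos_INR).
  rewrite (Rabs_right (rho ^ n)), (Rabs_right 2), (Rabs_right PI) in F by lra.
  apply (Rmult_le_reg_l (rho ^ n * (2 * PI))); [nra|].
  replace (rho ^ n * (2 * PI) * (2 * INR (fact n) * M / rho ^ n))
    with (INR (fact n) * (4 * PI * M)) by (field; lra).
  simpl Nat.add in F.
  replace (rho ^ n * (2 * PI) * Cmod (D n w)) with (rho ^ n * (2 * PI * Cmod (D n w))) by ring.
  rewrite <- F. apply Rmult_le_compat_l; auto.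
Qed.

End CauchyEstimates.

(** * Taylor expansion on the unit disk *)

Fixpoint Csum (g : nat -> C) (n : nat) : C :=
  match n with O => g O | S k => (Csum g k + g (S k))%C end.

Lemma Csum_S (g : nat -> C) (n : nat) : Csum g (S n) = (Csum g n + g (S n))%C.
Proof. reflexivity. Qed.

Lemma Re_Csum (g : nat -> C) (n : nat) : Re (Csum g n) = sum_f_R0 (fun m => Re (g m)) n.
Proof. induction n; simpl; auto. rewrite <- IHn. destruct (Csum g n), (g (S n)); reflexivity. Qed.

Lemma Im_Csum (g : nat -> C) (n : nat) : Im (Csum g n) = sum_f_R0 (fun m => Im (g m)) n.
Proof. induction n; simpl; auto. rewrite <- IHn. destruct (Csum g n), (g (S n)); reflexivity. Qed.

Lemma Csum_ext (g h : nat -> C) (n : nat) : (forall k, g k = h k) -> Csum g n = Csum h n.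
Proof. intros H. induction n; simpl; rewrite ?IHn, ?H; auto. Qed.

Lemma Csum_minus (g h : nat -> C) (n : nat) :
  Csum (fun k => g k - h k)%C n = (Csum g n - Csum h n)%C.
Proof. induction n; simpl; [ring|]. rewrite IHn. ring. Qed.

Lemma Taylor_Lagrange_tower (h : nat -> R -> R) (N : nat) :
  (forall k t, is_derive (h k) t (h (S k) t)) ->
  exists c, 0 < c < 1 /\
    h 0%nat 1 = sum_f_R0 (fun m => h m 0 / INR (fact m)) N + h (S N) c / INR (fact (S N)).
Proof.
  intros Hh.
  assert (HD : forall k, Derive_n (h 0%nat) k = h k).
  { induction k as [|k IH]; [reflexivity|]. simpl. rewrite IH.
    apply functional_extensionality. intros t. apply is_derive_unique, Hh. }
  destruct (Taylor_Lagrange (h 0%nat) N 0 1 Rlt_0_1) as [c [Hc T]].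
  { intros t _ [|k] _; [exact I|]. simpl. rewrite HD. exists (h (S k) t). apply Hh. }
  exists c. split; [exact Hc|]. rewrite T, HD, Rminus_0_r, pow1, Rdiv_1_l. f_equal.
  - apply sum_eq. intros m _. rewrite HD, pow1. unfold Rdiv. ring.
  - unfold Rdiv. ring.
Qed.

Lemma Taylor_curve_le (g : nat -> R -> C) (N : nat) (B : R) :
  (forall k t, curve_deriv (g k) t (g (S k) t)) ->
  (forall t, 0 <= t <= 1 -> Cmod (g (S N) t) <= B) ->
  Cmod (g 0%nat 1 - Csum (fun m => / INR (fact m) * g m 0)%C N) <= 2 * B / INR (fact (S N)).
Proof.
  intros Hg HB.
  destruct (Taylor_Lagrange_tower (fun k t => Re (g k t)) N) as [c1 [Hc1 T1]].
  { intros k t. apply curve_deriv_Re, Hg. }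
  destruct (Taylor_Lagrange_tower (fun k t => Im (g k t)) N) as [c2 [Hc2 T2]].
  { intros k t. apply curve_deriv_Im, Hg. }
  pose proof (INR_fact_lt_0 (S N)) as Hf.
  assert (Hpart : forall p : C -> R, (forall c, Rabs (p c) <= Cmod c) -> forall c, 0 < c < 1 ->
            Rabs (p (g (S N) c) / INR (fact (S N))) <= B / INR (fact (S N))).
  { intros p Hp c Hc. unfold Rdiv. rewrite Rabs_mult, (Rabs_right (/ _)) by
      (left; apply Rinv_0_lt_compat; lra).
    apply Rmult_le_compat_r; [left; apply Rinv_0_lt_compat; lra|].
    eapply Rle_trans; [apply Hp|apply HB; lra]. }
  eapply Rle_trans; [apply Cmod_le_Re_Im|].
  replace (Re (g 0%nat 1 - Csum (fun m => / INR (fact m) * g m 0) N)%C)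
    with (Re (g (S N) c1) / INR (fact (S N))).
  2:{ replace (Re (_ - _)%C) with (Re (g 0%nat 1) - Re (Csum (fun m => / INR (fact m) * g m 0) N)%C)
        by (destruct (g 0%nat 1), (Csum _ N); simpl; ring).
      rewrite T1, Re_Csum. rewrite (sum_eq (fun m => Re (/ INR (fact m) * g m 0)%C)
                                      (fun m => Re (g m 0) / INR (fact m)));
        [ring|].
      intros m _. rewrite <- RtoC_inv, re_scal_l by apply INR_fact_neq_0. unfold Rdiv. ring. }
  replace (Im (g 0%nat 1 - Csum (fun m => / INR (fact m) * g m 0) N)%C)
    with (Im (g (S N) c2) / INR (fact (S N))).
  2:{ replace (Im (_ - _)%C) with (Im (g 0%nat 1) - Im (Csum (fun m => / INR (fact m) * g m 0) N)%C)
        by (destruct (g 0%nat 1), (Csum _ N); simpl; ring).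
      rewrite T2, Im_Csum. rewrite (sum_eq (fun m => Im (/ INR (fact m) * g m 0)%C)
                                      (fun m => Im (g m 0) / INR (fact m)));
        [ring|].
      intros m _. rewrite <- RtoC_inv, im_scal_l by apply INR_fact_neq_0. unfold Rdiv. ring. }
  pose proof (Hpart Re re_le_Cmod c1 Hc1). pose proof (Hpart Im im_le_Cmod c2 Hc2). lra.
Qed.

Definition taylor_term (a : nat -> C) (z : C) (m : nat) : C := (/ INR (fact m) * (a m * z ^ m))%C.

Section TaylorOnDisk.

Variable D : nat -> C -> C.
Hypothesis HD : forall n z, Cderiv (D n) z (D (S n) z).

Lemma curve_deriv_radial (z : C) (k : nat) (t : R) :
  curve_deriv (fun s => z ^ k * D k (s * z))%C t (z ^ S k * D (S k) (t * z))%C.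
Proof.
  replace (z ^ S k * D (S k) (t * z))%C with (z ^ k * (z * D (S k) (t * z)))%C
    by (rewrite Cpow_S; ring).
  apply curve_deriv_scal, curve_deriv_comp; [apply HD|].
  apply (curve_deriv_ext (fun s => 0 + s * z)%C); [intros; ring|]. apply curve_deriv_line.
Qed.

(** Cauchy estimates on circles of radius [2] around points of the unit disk. *)
Lemma derivs_bounded_on_unit_disk :
  exists M, 0 <= M /\
    forall n v, Cmod v <= 1 -> Cmod (D n v) <= 2 * INR (fact n) * M / 2 ^ n.
Proof.
  destruct (Ccont_bounded_on_disk (D 0) 0 3 (fun z => Cderiv_cont _ _ _ (HD _ z))) as [M HM].
  exists M. split.
  - apply (Rle_trans _ (Cmod (D 0%nat 0))); [apply Cmod_ge_0|].
    apply HM. rewrite Cminus_diag, Cmod_0. lra.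
  - intros n v Hv. apply Cauchy_estimate; auto; [lra|]. intros y Hy. apply HM.
    rewrite Cminus_0_r. pose proof (Cmod_triangle_minus y v 0). rewrite !Cminus_0_r in H. lra.
Qed.

Lemma taylor_remainder_le :
  exists M, 0 <= M /\ forall N z, Cmod z <= 1 ->
    Cmod (D 0 z - Csum (taylor_term (fun m => D m 0) z) N) <= 4 * M / 2 ^ S N.
Proof.
  destruct derivs_bounded_on_unit_disk as [M [HM DB]].
  exists M. split; auto. intros N z Hz.
  set (g := fun k (s : R) => (z ^ k * D k (s * z))%C).
  assert (Hg1 : g 0%nat 1 = D 0 z).
  { unfold g. replace (RtoC 1 * z)%C with z by ring. simpl. ring. }
  assert (Hsum : Csum (fun m => / INR (fact m) * g m 0)%C N = Csum (taylor_term (fun m => D m 0) z) N).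
  { apply Csum_ext. intros m. unfold g, taylor_term. rewrite Cmult_0_l. ring. }
  rewrite <- Hg1, <- Hsum.
  pose proof (INR_fact_lt_0 (S N)). pose proof (pow_lt 2 (S N) ltac:(lra)).
  replace (4 * M / 2 ^ S N) with (2 * (2 * INR (fact (S N)) * M / 2 ^ S N) / INR (fact (S N)))
    by (field; lra).
  apply Taylor_curve_le; [intros; apply curve_deriv_radial|].
  intros t Ht. unfold g. rewrite Cmod_mult, Cmod_pow.
  assert (Cmod z ^ S N <= 1) by (rewrite <- (pow1 (S N)); apply pow_incr; split; [apply Cmod_ge_0|auto]).
  assert (Hd : Cmod (D (S N) (t * z)) <= 2 * INR (fact (S N)) * M / 2 ^ S N).
  { apply DB. rewrite Cmod_mult, Cmod_R, Rabs_right by lra. pose proof (Cmod_ge_0 z). nra. }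
  pose proof (pow_le (Cmod z) (S N) (Cmod_ge_0 z)). pose proof (Cmod_ge_0 (D (S N) (t * z))).
  apply (Rle_trans _ (1 * Cmod (D (S N) (t * z)))); [apply Rmult_le_compat_r; auto|lra].
Qed.

End TaylorOnDisk.

(** * The key estimate for even maps *)

Definition even_weight (k : nat) : R := INR k / INR (fact (2 * k)).

Lemma even_weight_step (N : nat) : (2 <= N)%nat -> 20 * even_weight (S N) <= even_weight N.
Proof.
  intros HN. unfold even_weight. replace (2 * S N)%nat with (S (S (2 * N))) by lia.
  rewrite !fact_simpl, !mult_INR, !S_INR, mult_INR. replace (INR 2) with 2 by (simpl; ring).
  pose proof (INR_fact_lt_0 (2 * N)). assert (2 <= INR N) by (apply (le_INR 2); auto).
  set (F := INR (fact (2 * N))) in *.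
  apply (Rmult_le_reg_r ((2 * INR N + 1) * (2 * INR N + 1 + 1) * F)); [nra|].
  replace (20 * ((INR N + 1) / ((2 * INR N + 1 + 1) * ((2 * INR N + 1) * F)))
           * ((2 * INR N + 1) * (2 * INR N + 1 + 1) * F)) with (20 * (INR N + 1)) by (field; nra).
  replace (INR N / F * ((2 * INR N + 1) * (2 * INR N + 1 + 1) * F))
    with (INR N * (2 * INR N + 1) * (2 * INR N + 2)) by (field; lra).
  assert (10 <= INR N * (2 * INR N + 1)) by nra. nra.
Qed.

Lemma even_weight_2 : even_weight 2 = 1 / 12.
Proof. unfold even_weight. simpl. field. Qed.

Lemma even_weight_ge_0 (k : nat) : 0 <= even_weight k.
Proof.
  unfold even_weight. apply Rmult_le_pos; [apply pos_INR|].
  left; apply Rinv_0_lt_compat, INR_fact_lt_0.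
Qed.

(** Geometric domination by the first term: [1/12 * 20/19 <= 1/11]. *)
Lemma Csum_tail_le (e : nat -> C) (B : R) :
  (forall k, (2 <= k)%nat -> Cmod (e k) <= B * even_weight k) ->
  forall N, (1 <= N)%nat -> Cmod (Csum e N - e 0%nat - e 1%nat) <= B / 11.
Proof.
  intros He.
  assert (HB : 0 <= B).
  { pose proof (Cmod_ge_0 (e 2%nat)). pose proof (He 2%nat ltac:(lia)).
    rewrite even_weight_2 in *. lra. }
  assert (Strong : forall N, (2 <= N)%nat ->
            Cmod (Csum e N - e 0%nat - e 1%nat) + B * even_weight N / 19 <= B / 11).
  { induction N as [|N IH]; intros HN; [lia|].
    destruct (Nat.eq_dec N 1) as [->|HN1].
    - simpl. replace (e 0%nat + e 1%nat + e 2%nat - e 0%nat - e 1%nat)%C with (e 2%nat) by ring.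
      pose proof (He 2%nat ltac:(lia)). rewrite even_weight_2 in *. lra.
    - specialize (IH ltac:(lia)). simpl Csum.
      replace (Csum e N + e (S N) - e 0%nat - e 1%nat)%C
        with ((Csum e N - e 0%nat - e 1%nat) + e (S N))%C by ring.
      pose proof (Cmod_triangle (Csum e N - e 0%nat - e 1%nat) (e (S N))).
      pose proof (He (S N) ltac:(lia)).
      assert (B * (20 * even_weight (S N)) <= B * even_weight N)
        by (apply Rmult_le_compat_l; [|apply even_weight_step]; lia || lra).
      lra. }
  intros N HN. destruct (Nat.eq_dec N 1) as [->|HN1].
  - simpl. replace (e 0%nat + e 1%nat - e 0%nat - e 1%nat)%C with (RtoC 0) by ring.
    rewrite Cmod_0. lra.
  - pose proof (Strong N ltac:(lia)). pose proof (even_weight_ge_0 N).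
    assert (0 <= B * even_weight N) by (apply Rmult_le_pos; auto). lra.
Qed.

Lemma Cmod_Cpow_sub_le (u1 u2 : C) (k : nat) : Cmod u1 <= 1 -> Cmod u2 <= 1 ->
  Cmod (u1 ^ k - u2 ^ k) <= INR k * Cmod (u1 - u2).
Proof.
  intros H1 H2. induction k as [|k IH].
  - simpl. rewrite Cminus_diag, Cmod_0. lra.
  - rewrite !Cpow_S.
    replace (u1 * u1 ^ k - u2 * u2 ^ k)%C with (u1 * (u1 ^ k - u2 ^ k) + (u1 - u2) * u2 ^ k)%C by ring.
    eapply Rle_trans; [apply Cmod_triangle|]. rewrite !Cmod_mult, Cmod_pow, S_INR.
    pose proof (Cmod_ge_0 u1). pose proof (Cmod_ge_0 (u1 - u2)).
    pose proof (Cmod_ge_0 (u1 ^ k - u2 ^ k)).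
    assert (Cmod u2 ^ k <= 1) by (rewrite <- (pow1 k); apply pow_incr; split; [apply Cmod_ge_0|auto]).
    pose proof (pow_le (Cmod u2) k (Cmod_ge_0 u2)). nra.
Qed.

Definition even_taylor (a : nat -> C) (u : C) (N : nat) : C :=
  Csum (fun k => / INR (fact (2 * k)) * (a (2 * k)%nat * u ^ k))%C N.

Lemma Cpow_double (z : C) (k : nat) : (z ^ (2 * k))%C = ((z * z) ^ k)%C.
Proof. rewrite Cpow_mult_r. f_equal. simpl. ring. Qed.

Lemma Csum_plus (g h : nat -> C) (n : nat) :
  Csum (fun k => g k + h k)%C n = (Csum g n + Csum h n)%C.
Proof. induction n; simpl; [ring|]. rewrite IHn. ring. Qed.

Lemma taylor_term_even_part (a : nat -> C) (z : C) (m : nat) :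
  (taylor_term a z m + taylor_term a (- z) m)%C
  = if Nat.even m then (2 * taylor_term a z m)%C else 0.
Proof.
  unfold taylor_term. destruct (Nat.Even_or_Odd m) as [[k ->]|[k ->]].
  - rewrite Nat.even_mul, !Cpow_double. replace (- z * - z)%C with (z * z)%C by ring.
    simpl. ring.
  - rewrite Nat.add_1_r, Nat.even_succ, Nat.odd_mul, !Cpow_S, !Cpow_double.
    replace (- z * - z)%C with (z * z)%C by ring. simpl. ring.
Qed.

Lemma Csum_taylor_term_even_part (a : nat -> C) (z : C) (N : nat) :
  (Csum (taylor_term a z) (S (2 * N)) + Csum (taylor_term a (- z)) (S (2 * N)))%C
  = (2 * even_taylor a (z * z) N)%C.
Proof.
  rewrite <- Csum_plus, (Csum_ext _ _ _ (taylor_term_even_part a z)).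
  unfold even_taylor. induction N as [|N IH].
  - unfold taylor_term; simpl. ring.
  - replace (S (2 * S N)) with (S (S (S (2 * N)))) by lia.
    rewrite Csum_S, Csum_S, IH, Csum_S.
    replace (S (S (2 * N))) with (2 * S N)%nat by lia.
    rewrite Nat.even_succ, Nat.odd_mul, Nat.even_mul. cbn [orb andb Nat.odd Nat.even negb].
    unfold taylor_term. rewrite Cpow_double. ring.
Qed.

Lemma Rle_of_le_add_div_pow2 (X Y c : R) : (forall n, X <= Y + c / 2 ^ n) -> X <= Y.
Proof.
  intros H. apply Rle_plus_epsilon. intros eps Heps.
  destruct (Rle_or_lt c 0) as [Hc|Hc].
  - specialize (H 0%nat). simpl in H. lra.
  - destruct (pow_lt_1_zero (/ 2) ltac:(rewrite Rabs_right; lra) (eps / c)) as [N HN].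
    { apply Rdiv_lt_0_compat; lra. }
    specialize (HN N (le_n N)). specialize (H N).
    rewrite Rabs_right, pow_inv in HN by (apply Rle_ge, pow_le; lra).
    assert (c / 2 ^ N < eps).
    { apply (Rmult_lt_reg_r (/ c)); [apply Rinv_0_lt_compat; lra|].
      replace (c / 2 ^ N * / c) with (/ 2 ^ N) by (field; split; try apply pow_nonzero; lra).
      exact HN. }
    lra.
Qed.

Section EvenMaps.

Variable D : nat -> C -> C.
Hypothesis HD : forall n z, Cderiv (D n) z (D (S n) z).
Hypothesis Heven : forall z, D 0%nat (- z)%C = D 0%nat z.

Let a (m : nat) : C := D m 0.

Lemma even_taylor_approx :
  exists M, 0 <= M /\ forall N z, Cmod z <= 1 ->
    Cmod (D 0 z - even_taylor a (z * z) N) <= 4 * M / 2 ^ S (S (2 * N)).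
Proof.
  destruct (taylor_remainder_le D HD) as [M [HM HT]].
  exists M. split; auto. intros N z Hz.
  pose proof (HT (S (2 * N)) z Hz) as T1.
  pose proof (HT (S (2 * N)) (- z)%C ltac:(rewrite Cmod_opp; auto)) as T2.
  rewrite Heven in T2. change (fun m => D m 0) with a in T1, T2.
  replace (D 0 z - even_taylor a (z * z) N)%C with
    (/ 2 * ((D 0 z - Csum (taylor_term a z) (S (2 * N))) +
            (D 0 z - Csum (taylor_term a (- z)) (S (2 * N)))))%C.
  2:{ assert (H2 : RtoC 2 <> 0) by (intros E; injection E; lra).
      replace (even_taylor a (z * z) N) with (/ 2 * (2 * even_taylor a (z * z) N))%C
        by (field; auto).
      rewrite <- (Csum_taylor_term_even_part a z N). field; auto. }
  rewrite Cmod_mult, Cmod_inv, Cmod_R, Rabs_right by (lra || (intros E; injection E; lra)).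
  pose proof (Cmod_triangle (D 0 z - Csum (taylor_term a z) (S (2 * N)))
                            (D 0 z - Csum (taylor_term a (- z)) (S (2 * N)))). lra.
Qed.

Lemma even_taylor_sub_le (A : R) (u1 u2 : C) (N : nat) :
  (forall k, (1 <= k)%nat -> Cmod (D (2 * k) 0) <= A) ->
  Cmod u1 <= 1 -> Cmod u2 <= 1 -> (1 <= N)%nat ->
  Cmod (even_taylor a u1 N - even_taylor a u2 N - D 2%nat 0 / 2 * (u1 - u2)) <= A / 11 * Cmod (u1 - u2).
Proof.
  intros HA Hu1 Hu2 HN.
  set (e := fun k => (/ INR (fact (2 * k)) * (a (2 * k)%nat * (u1 ^ k - u2 ^ k)))%C).
  assert (Ediff : (even_taylor a u1 N - even_taylor a u2 N)%C = Csum e N).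
  { unfold even_taylor. rewrite <- Csum_minus. apply Csum_ext. intros k. unfold e. ring. }
  assert (E0 : e 0%nat = 0) by (unfold e; simpl; ring).
  assert (E1 : e 1%nat = (D 2%nat 0 / 2 * (u1 - u2))%C).
  { unfold e, a. replace (INR (fact (2 * 1))) with 2 by (simpl; ring). simpl. field. }
  rewrite Ediff, <- E1.
  replace (Csum e N - e 1%nat)%C with (Csum e N - e 0%nat - e 1%nat)%C by (rewrite E0; ring).
  replace (A / 11 * Cmod (u1 - u2)) with (A * Cmod (u1 - u2) / 11) by (unfold Rdiv; ring).
  apply Csum_tail_le; auto. intros k Hk.
  unfold e, even_weight. rewrite !Cmod_mult, Cmod_inv, Cmod_R, Rabs_right
    by (apply Rle_ge, pos_INR || (intros E; injection E; apply INR_fact_neq_0)).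
  pose proof (HA k ltac:(lia)) as Ha. pose proof (Cmod_Cpow_sub_le u1 u2 k Hu1 Hu2).
  pose proof (INR_fact_lt_0 (2 * k)). pose proof (pos_INR k).
  pose proof (Cmod_ge_0 (a (2 * k)%nat)). pose proof (Cmod_ge_0 (u1 ^ k - u2 ^ k)).
  pose proof (Cmod_ge_0 (u1 - u2)).
  assert (Cmod (a (2 * k)%nat) * Cmod (u1 ^ k - u2 ^ k) <= A * (INR k * Cmod (u1 - u2)))
    by (apply Rmult_le_compat; auto).
  apply (Rle_trans _ (/ INR (fact (2 * k)) * (A * (INR k * Cmod (u1 - u2))))).
  - apply Rmult_le_compat_l; [left; apply Rinv_0_lt_compat|]; auto.
  - right. unfold Rdiv. ring.
Qed.

(** Pass to the limit [N -> oo] in the estimate for the truncated even Taylor series. *)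
Lemma even_quadratic_approx (A : R) (z1 z2 : C) :
  (forall k, (1 <= k)%nat -> Cmod (D (2 * k) 0) <= A) ->
  Cmod z1 <= 1 -> Cmod z2 <= 1 ->
  Cmod (D 0 z1 - D 0 z2 - D 2%nat 0 / 2 * (z1 * z1 - z2 * z2))
    <= A / 11 * Cmod (z1 * z1 - z2 * z2).
Proof.
  intros HA H1 H2. destruct even_taylor_approx as [M [HM HE]].
  apply (Rle_of_le_add_div_pow2 _ _ (8 * M)). intros n.
  set (N := S n). set (u1 := (z1 * z1)%C). set (u2 := (z2 * z2)%C).
  pose proof (HE N z1 H1) as V1. pose proof (HE N z2 H2) as V2. fold u1 in V1. fold u2 in V2.
  pose proof (even_taylor_sub_le A u1 u2 N HA (Cmod_sqr_le_1 z1 H1) (Cmod_sqr_le_1 z2 H2)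
                ltac:(unfold N; lia)) as T.
  replace (D 0 z1 - D 0 z2 - D 2%nat 0 / 2 * (u1 - u2))%C
    with ((D 0 z1 - even_taylor a u1 N) - (D 0 z2 - even_taylor a u2 N)
          + (even_taylor a u1 N - even_taylor a u2 N - D 2%nat 0 / 2 * (u1 - u2)))%C by ring.
  eapply Rle_trans; [apply Cmod_triangle|].
  pose proof (Cmod_minus_le (D 0 z1 - even_taylor a u1 N) (D 0 z2 - even_taylor a u2 N)).
  assert (P : 4 * M / 2 ^ S (S (2 * N)) <= 4 * M / 2 ^ n).
  { unfold Rdiv. apply Rmult_le_compat_l; [lra|]. apply Rinv_le_contravar; [apply pow_lt; lra|].
    apply Rle_pow; [lra|]. unfold N; lia. }
  lra.
Qed.

End EvenMaps.

(** * Completeness and the contraction principle *)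

Definition Cseq_lim (x : nat -> C) (u : C) : Prop :=
  forall e, 0 < e -> exists N, forall n, (N <= n)%nat -> Cmod (x n - u) < e.

Lemma C_complete (x : nat -> C) :
  (forall e, 0 < e -> exists N, forall n m, (N <= n)%nat -> (N <= m)%nat -> Cmod (x m - x n) < e) ->
  exists u, Cseq_lim x u.
Proof.
  intros Cau.
  destruct (Rcomplete.R_complete (fun k => Re (x k))) as [lr Hlr].
  { intros e He. destruct (Cau e He) as [N HN]. exists N. intros n m Hn Hm. unfold Rdist.
    eapply Rle_lt_trans; [|apply (HN m n); auto].
    replace (Re (x n) - Re (x m)) with (Re (x n - x m)) by (destruct (x n), (x m); simpl; ring).
    apply re_le_Cmod. }
  destruct (Rcomplete.R_complete (fun k => Im (x k))) as [li Hli].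
  { intros e He. destruct (Cau e He) as [N HN]. exists N. intros n m Hn Hm. unfold Rdist.
    eapply Rle_lt_trans; [|apply (HN m n); auto].
    replace (Im (x n) - Im (x m)) with (Im (x n - x m)) by (destruct (x n), (x m); simpl; ring).
    apply im_le_Cmod. }
  exists (lr, li). intros e He.
  destruct (Hlr (e / 2)) as [N1 H1]; [lra|]. destruct (Hli (e / 2)) as [N2 H2]; [lra|].
  exists (max N1 N2). intros n Hn. eapply Rle_lt_trans; [apply Cmod_le_Re_Im|].
  specialize (H1 n ltac:(lia)). specialize (H2 n ltac:(lia)). unfold Rdist in H1, H2.
  destruct (x n) as [a b]. simpl in *. unfold Rminus in *. lra.
Qed.

Lemma Cseq_lim_closed_ball (x : nat -> C) (u c : C) (rho : R) :
  Cseq_lim x u -> (forall n, Cmod (x n - c) <= rho) -> Cmod (u - c) <= rho.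
Proof.
  intros Hlim Hx. apply Rle_plus_epsilon. intros e He.
  destruct (Hlim e He) as [N HN]. specialize (HN N (le_n N)).
  pose proof (Cmod_triangle_minus u (x N) c). rewrite Cmod_minus_sym in HN.
  pose proof (Hx N). lra.
Qed.

Section Contraction.

Variables (T : C -> C) (c : C) (rho q : R).
Hypothesis Hrho : 0 <= rho.
Hypothesis Hq : 0 <= q < 1.
Hypothesis Hself : forall u, Cmod (u - c) <= rho -> Cmod (T u - c) <= rho.
Hypothesis Hcontr : forall u v, Cmod (u - c) <= rho -> Cmod (v - c) <= rho ->
  Cmod (T u - T v) <= q * Cmod (u - v).

Let x (n : nat) : C := Nat.iter n T c.

Lemma contraction_iter_in_ball (n : nat) : Cmod (x n - c) <= rho.
Proof.
  unfold x. apply Nat.iter_invariant; [intros; apply Hself; auto|].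
  rewrite Cminus_diag, Cmod_0. exact Hrho.
Qed.

Lemma contraction_iter_step (n : nat) : Cmod (x (S n) - x n) <= q ^ n * rho.
Proof.
  induction n as [|n IH].
  - simpl pow. rewrite Rmult_1_l. apply Hself. rewrite Cminus_diag, Cmod_0. exact Hrho.
  - change (x (S (S n))) with (T (x (S n))). change (x (S n)) with (T (x n)) at 2.
    eapply Rle_trans; [apply Hcontr; apply contraction_iter_in_ball|].
    simpl pow. rewrite Rmult_assoc. apply Rmult_le_compat_l; [lra|exact IH].
Qed.

Lemma contraction_iter_dist (n m : nat) : (n <= m)%nat -> Cmod (x m - x n) <= rho * q ^ n / (1 - q).
Proof.
  intros Hnm. replace m with (n + (m - n))%nat by lia. generalize (m - n)%nat as k. intros k.
  assert (H : Cmod (x (n + k)%nat - x n) <= rho * q ^ n * (1 - q ^ k) / (1 - q)).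
  { induction k as [|k IH].
    - rewrite Nat.add_0_r, Cminus_diag, Cmod_0. simpl. unfold Rdiv. rewrite Rminus_diag. lra.
    - rewrite <- plus_n_Sm.
      eapply Rle_trans; [apply (Cmod_triangle_minus _ (x (n + k)%nat))|].
      eapply Rle_trans; [apply Rplus_le_compat; [apply contraction_iter_step|apply IH]|].
      rewrite pow_add. right. simpl. field. lra. }
  eapply Rle_trans; [exact H|]. unfold Rdiv.
  apply Rmult_le_compat_r; [left; apply Rinv_0_lt_compat; lra|].
  pose proof (pow_le q n ltac:(lra)). pose proof (pow_le q k ltac:(lra)).
  assert (0 <= rho * q ^ n) by (apply Rmult_le_pos; lra). nra.
Qed.

Lemma contraction_iter_Cauchy (e : R) : 0 < e ->
  exists N, forall n m, (N <= n)%nat -> (N <= m)%nat -> Cmod (x m - x n) < e.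
Proof.
  intros He.
  destruct (pow_lt_1_zero q ltac:(rewrite Rabs_right; lra) (e * (1 - q) / (rho + 1))) as [N HN].
  { apply Rdiv_lt_0_compat; nra. }
  assert (G : forall a b, (N <= a)%nat -> (a <= b)%nat -> Cmod (x b - x a) < e).
  { intros a b Ha Hab. eapply Rle_lt_trans; [apply contraction_iter_dist; auto|].
    specialize (HN a Ha). rewrite Rabs_right in HN by (apply Rle_ge, pow_le; lra).
    apply (Rmult_lt_reg_r (1 - q)); [lra|]. unfold Rdiv. rewrite Rmult_assoc, Rinv_l by lra.
    assert ((rho + 1) * q ^ a < e * (1 - q)).
    { apply (Rmult_lt_reg_r (/ (rho + 1))); [apply Rinv_0_lt_compat; lra|].
      replace ((rho + 1) * q ^ a * / (rho + 1)) with (q ^ a) by (field; lra). exact HN. }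
    pose proof (pow_le q a ltac:(lra)). nra. }
  exists N. intros n m Hn Hm. destruct (Nat.le_ge_cases n m); [apply G; auto|].
  rewrite Cmod_minus_sym. apply G; auto.
Qed.

Lemma contraction_fixed_point : exists u, Cmod (u - c) <= rho /\ T u = u.
Proof.
  destruct (C_complete x contraction_iter_Cauchy) as [u Hu].
  assert (Hball : Cmod (u - c) <= rho)
    by exact (Cseq_lim_closed_ball x u c rho Hu contraction_iter_in_ball).
  exists u. split; auto.
  apply Cmod_minus_eq_0, Rle_antisym; [|apply Cmod_ge_0]. apply Rle_plus_epsilon.
  intros e He. rewrite Rplus_0_l. destruct (Hu (e / 2)) as [N HN]; [lra|].
  pose proof (HN N (le_n N)) as A. pose proof (HN (S N) (le_S _ _ (le_n N))) as B.
  change (x (S N)) with (T (x N)) in B.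
  pose proof (Cmod_triangle_minus (T u) (T (x N)) u).
  pose proof (Hcontr u (x N) Hball (contraction_iter_in_ball N)).
  rewrite (Cmod_minus_sym u (x N)) in H0.
  assert (q * Cmod (x N - u) <= Cmod (x N - u)) by (pose proof (Cmod_ge_0 (x N - u)); nra).
  lra.
Qed.

End Contraction.

(** * Topology of the unit disk *)

Lemma path_in_lipschitz (U V : C -> Prop) (Phi : C -> C) (A : R) (g : R -> C) :
  0 < A -> (forall u, U u -> V (Phi u)) ->
  (forall u v, U u -> U v -> Cmod (Phi u - Phi v) <= A * Cmod (u - v)) ->
  path_in U g -> path_in V (fun t => Phi (g t)).
Proof.
  intros HA HUV Hlip [Hg Hgc]. split; [intros t Ht; apply HUV, Hg, Ht|].
  intros t e Ht He. destruct (Hgc t (e / A) Ht) as [d [Hd Hd']]; [apply Rdiv_lt_0_compat; lra|].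
  exists d. split; auto. intros t' Ht' Htt'.
  eapply Rle_lt_trans; [apply Hlip; apply Hg; auto|].
  specialize (Hd' t' Ht' Htt'). apply (Rmult_lt_reg_l (/ A)); [apply Rinv_0_lt_compat; lra|].
  rewrite <- Rmult_assoc, Rinv_l, Rmult_1_l by lra. rewrite Rmult_comm. exact Hd'.
Qed.

Lemma homotopy_in_lipschitz (U V : C -> Prop) (Phi : C -> C) (A : R) (H : R -> R -> C) :
  0 < A -> (forall u, U u -> V (Phi u)) ->
  (forall u v, U u -> U v -> Cmod (Phi u - Phi v) <= A * Cmod (u - v)) ->
  homotopy_in U H -> homotopy_in V (fun s t => Phi (H s t)).
Proof.
  intros HA HUV Hlip [HH HHc]. split; [intros s t Hs Ht; apply HUV, HH; auto|].
  intros s t e Hs Ht He. destruct (HHc s t (e / A) Hs Ht) as [d [Hd Hd']].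
  { apply Rdiv_lt_0_compat; lra. }
  exists d. split; auto. intros s' t' Hs' Ht' Hss' Htt'.
  eapply Rle_lt_trans; [apply Hlip; apply HH; auto|].
  specialize (Hd' s' t' Hs' Ht' Hss' Htt'). apply (Rmult_lt_reg_l (/ A)); [apply Rinv_0_lt_compat; lra|].
  rewrite <- Rmult_assoc, Rinv_l, Rmult_1_l by lra. rewrite Rmult_comm. exact Hd'.
Qed.

Lemma unit_disk_convex (a b : C) (t : R) : I01 t -> unit_disk a -> unit_disk b ->
  unit_disk (RtoC (1 - t) * a + t * b)%C.
Proof.
  unfold I01, unit_disk. intros Ht Ha Hb. eapply Rle_lt_trans; [apply Cmod_triangle|].
  rewrite !Cmod_mult, !Cmod_R, (Rabs_right (1 - t)), (Rabs_right t) by lra.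
  destruct (Req_dec t 0) as [->|Hn]; [lra|]. assert (0 < t) by lra. nra.
Qed.

Lemma path_in_segment (a b : C) : unit_disk a -> unit_disk b ->
  path_in unit_disk (fun t => RtoC (1 - t) * a + t * b)%C.
Proof.
  intros Ha Hb. split; [intros t Ht; apply unit_disk_convex; auto|].
  intros t e Ht He. exists (e / 2). split; [lra|]. intros t' Ht' Htt'.
  replace (RtoC (1 - t') * a + t' * b - (RtoC (1 - t) * a + t * b))%C with (RtoC (t' - t) * (b - a))%C
    by (rewrite !RtoC_minus; ring).
  rewrite Cmod_RtoC_mult. unfold unit_disk in *.
  pose proof (Cmod_minus_le b a). pose proof (Rabs_pos (t' - t)). nra.
Qed.

Lemma homotopy_in_shrink (g : R -> C) : path_in unit_disk g ->
  homotopy_in unit_disk (fun s t => RtoC (1 - s) * g t)%C.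
Proof.
  intros [Hg Hgc]. split.
  - intros s t Hs Ht. unfold I01, unit_disk in *. rewrite Cmod_mult, Cmod_R, Rabs_right by lra.
    pose proof (Hg t Ht). pose proof (Cmod_ge_0 (g t)). nra.
  - intros s t e Hs Ht He. destruct (Hgc t (e / 2) Ht) as [d [Hd Hd']]; [lra|].
    exists (Rmin d (e / 2)). split; [apply Rmin_pos; lra|].
    intros s' t' Hs' Ht' Hss' Htt'.
    pose proof (Rmin_l d (e / 2)). pose proof (Rmin_r d (e / 2)).
    replace (RtoC (1 - s') * g t' - RtoC (1 - s) * g t)%C
      with (RtoC (1 - s') * (g t' - g t) + RtoC (s - s') * g t)%C by (rewrite !RtoC_minus; ring).
    eapply Rle_lt_trans; [apply Cmod_triangle|]. rewrite !Cmod_mult, !Cmod_R.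
    unfold I01, unit_disk in *. rewrite (Rabs_right (1 - s')) by lra.
    specialize (Hd' t' Ht' ltac:(lra)). pose proof (Hg t Ht). rewrite Rabs_minus_sym.
    pose proof (Cmod_ge_0 (g t' - g t)). pose proof (Cmod_ge_0 (g t)). pose proof (Rabs_pos (s' - s)).
    nra.
Qed.

Lemma simply_connectedC_of_lipschitz_chart (W : C -> Prop) (Phi Psi : C -> C) (A B : R) :
  0 < A -> 0 < B ->
  (forall u, unit_disk u -> W (Phi u)) ->
  (forall w, W w -> unit_disk (Psi w)) ->
  (forall w, W w -> Phi (Psi w) = w) ->
  (forall u v, unit_disk u -> unit_disk v -> Cmod (Phi u - Phi v) <= A * Cmod (u - v)) ->
  (forall w1 w2, W w1 -> W w2 -> Cmod (Psi w1 - Psi w2) <= B * Cmod (w1 - w2)) ->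
  simply_connectedC W.
Proof.
  intros HA HB HPhi HPsi Hinv LPhi LPsi. split.
  - intros a b Ha Hb.
    exists (fun t => Phi (RtoC (1 - t) * Psi a + t * Psi b)%C). split; [|split].
    + apply (path_in_lipschitz unit_disk W Phi A); auto. apply path_in_segment; auto.
    + rewrite Rminus_0_r. replace (1 * Psi a + 0 * Psi b)%C with (Psi a) by ring. auto.
    + rewrite Rminus_diag. replace (0 * Psi a + 1 * Psi b)%C with (Psi b) by ring. auto.
  - intros g Hg Hg01. exists (fun s t => Phi (RtoC (1 - s) * Psi (g t))%C). split; [|split; [|split]].
    + apply (homotopy_in_lipschitz unit_disk W Phi A); auto.
      apply homotopy_in_shrink, (path_in_lipschitz W unit_disk Psi B); auto.
    + intros t Ht. rewrite Rminus_0_r. replace (1 * Psi (g t))%C with (Psi (g t)) by ring.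
      apply Hinv, (proj1 Hg), Ht.
    + intros t _. rewrite Rminus_diag, !Cmult_0_l. reflexivity.
    + intros s _. rewrite Hg01. reflexivity.
Qed.

Lemma simply_connected_unit_disk : simply_connectedC unit_disk.
Proof.
  apply (simply_connectedC_of_lipschitz_chart _ (fun u => u) (fun u => u) 1 1); auto; intros; lra.
Qed.

Lemma closure_unit_disk (z : C) : closureC unit_disk z <-> Cmod z <= 1.
Proof.
  split.
  - intros H. destruct (Rle_or_lt (Cmod z) 1) as [|Hz]; auto. exfalso.
    destruct (H (Cmod z - 1)) as [y [Hy Hyz]]; [lra|]. unfold unit_disk in Hy.
    pose proof (Cmod_triangle_minus z y 0) as T. rewrite !Cminus_0_r in T.
    rewrite Cmod_minus_sym in Hyz. lra.
  - intros Hz e He. set (s := Rmin e 1 / 2).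
    assert (Hs : 0 < s /\ s <= 1 / 2 /\ s < e).
    { pose proof (Rmin_l e 1). pose proof (Rmin_r e 1).
      assert (0 < Rmin e 1) by (apply Rmin_pos; lra). unfold s. lra. }
    pose proof (Cmod_ge_0 z).
    exists (RtoC (1 - s) * z)%C. split.
    + unfold unit_disk. rewrite Cmod_mult, Cmod_R, Rabs_right by lra. nra.
    + replace (RtoC (1 - s) * z - z)%C with (RtoC (- s) * z)%C by (rewrite RtoC_opp, RtoC_minus; ring).
      rewrite Cmod_mult, Cmod_R, Rabs_left by lra. nra.
Qed.

Lemma compactC_ext (K1 K2 : C -> Prop) : (forall z, K1 z <-> K2 z) -> compactC K1 -> compactC K2.
Proof.
  intros E H I O Ho Hc. destruct (H I O Ho) as [l Hl]; [intros z Hz; apply Hc, E, Hz|].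
  exists l. intros z Hz. apply Hl, E, Hz.
Qed.

Lemma compact_closure_unit_disk : compactC (closureC unit_disk).
Proof.
  apply (compactC_ext (fun z => Cmod (z - 0) <= 1)); [|apply compact_disk].
  intros z. rewrite closure_unit_disk, Cminus_0_r. tauto.
Qed.

Lemma compactC_complement_open (K : C -> Prop) : compactC K -> forall y, ~ K y ->
  exists e, 0 < e /\ forall x, Cmod (x - y) < e -> ~ K x.
Proof.
  intros HK y Hy.
  destruct (HK nat (fun n x => / INR (S n) < Cmod (x - y))) as [l Hl].
  - intros n x Hx. exists (Cmod (x - y) - / INR (S n)). split; [lra|].
    intros x' Hx'. pose proof (Cmod_triangle_minus x x' y). rewrite Cmod_minus_sym in Hx'. lra.
  - intros x Hx. assert (P : 0 < Cmod (x - y)).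
    { apply Cmod_gt_0. intros E. apply Hy. rewrite <- (Cmod_minus_eq_0 x y); auto.
      rewrite E, Cmod_0. reflexivity. }
    destruct (archimed (/ Cmod (x - y))) as [Ha _]. pose proof (Rinv_0_lt_compat _ P).
    exists (Z.to_nat (up (/ Cmod (x - y)))).
    rewrite S_INR, INR_IZR_INZ, Znat.Z2Nat.id by (apply le_IZR; lra).
    apply (Rlt_le_trans _ (/ / Cmod (x - y))); [|rewrite Rinv_inv; lra].
    apply Rinv_lt_contravar; [nra|lra].
  - set (N := fold_right max 0%nat l).
    assert (HN : forall n, In n l -> (n <= N)%nat).
    { intros n Hn. unfold N. clear Hl. induction l as [|m l IH]; simpl in *; [tauto|].
      destruct Hn as [->|Hn]; [lia|]. specialize (IH Hn). lia. }
    exists (/ INR (S N)). split; [apply Rinv_0_lt_compat, lt_0_INR; lia|].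
    intros x Hx HKx. destruct (Hl x HKx) as [n [Hn1 Hn2]].
    assert (/ INR (S N) <= / INR (S n)).
    { apply Rinv_le_contravar; [apply lt_0_INR; lia|]. apply le_INR. specialize (HN n Hn1). lia. }
    lra.
Qed.

Lemma compactC_disk_inter (c : C) (r : R) (P : C -> Prop) :
  (forall y, ~ P y -> exists e, 0 < e /\ forall x, Cmod (x - y) < e -> ~ P x) ->
  compactC (fun z => Cmod (z - c) <= r /\ P z).
Proof.
  intros HP I O Ho Hc.
  set (O' := fun (o : option I) x => match o with Some i => O i x | None => ~ P x end).
  destruct (compact_disk c r (option I) O') as [l Hl].
  - intros [i|] x Hx; simpl in Hx; [apply Ho; auto|].
    destruct (HP x Hx) as [e [He He']]. exists e. split; auto.
  - intros z Hz. destruct (classic (P z)) as [Pz|nPz].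
    + destruct (Hc z (conj Hz Pz)) as [i Hi]. exists (Some i). exact Hi.
    + exists None. exact nPz.
  - exists (flat_map (fun o => match o with Some i => i :: nil | None => nil end) l).
    intros z [Hz Pz]. destruct (Hl z Hz) as [[i|] [Hin Hi]]; simpl in Hi; [|tauto].
    exists i. split; auto. apply in_flat_map. exists (Some i). simpl; auto.
Qed.

(** * Quadratic-like maps on the unit disk *)

Definition sgn (y : R) : R := if Rle_dec 0 y then 1 else -1.

Definition csqrt (u : C) : C :=
  (sqrt ((Cmod u + Re u) / 2), sgn (Im u) * sqrt ((Cmod u - Re u) / 2)).

Lemma csqrt_sqr (u : C) : (csqrt u * csqrt u)%C = u.
Proof.
  pose proof (re_le_Cmod u) as Hx. pose proof (Cmod2_alt u) as Hr.
  destruct u as [x y]. unfold csqrt, Cmult. simpl Re in *. simpl Im in *. simpl fst; simpl snd.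
  set (r := Cmod (x, y)) in *.
  assert (Hx1 : - r <= x <= r) by (unfold Rabs in Hx; destruct Rcase_abs; lra).
  assert (A : sqrt ((r + x) / 2) * sqrt ((r + x) / 2) = (r + x) / 2) by (apply sqrt_sqrt; lra).
  assert (B : sqrt ((r - x) / 2) * sqrt ((r - x) / 2) = (r - x) / 2) by (apply sqrt_sqrt; lra).
  assert (S2 : sgn y * sgn y = 1) by (unfold sgn; destruct Rle_dec; ring).
  assert (AB : sqrt ((r + x) / 2) * sqrt ((r - x) / 2) = Rabs y / 2).
  { rewrite <- sqrt_mult by lra. replace ((r + x) / 2 * ((r - x) / 2)) with (Rsqr (y / 2)).
    - rewrite sqrt_Rsqr_abs. unfold Rdiv. rewrite Rabs_mult, (Rabs_right (/ 2)) by lra. reflexivity.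
    - unfold Rsqr. simpl in Hr. nra. }
  f_equal.
  - replace (sqrt ((r + x) / 2) * sqrt ((r + x) / 2)
             - sgn y * sqrt ((r - x) / 2) * (sgn y * sqrt ((r - x) / 2)))
      with (sqrt ((r + x) / 2) * sqrt ((r + x) / 2)
            - (sgn y * sgn y) * (sqrt ((r - x) / 2) * sqrt ((r - x) / 2))) by ring.
    rewrite A, B, S2. field.
  - replace (sqrt ((r + x) / 2) * (sgn y * sqrt ((r - x) / 2))
             + sgn y * sqrt ((r - x) / 2) * sqrt ((r + x) / 2))
      with (2 * sgn y * (sqrt ((r + x) / 2) * sqrt ((r - x) / 2))) by ring.
    rewrite AB. unfold sgn, Rabs. destruct Rle_dec, Rcase_abs; lra.
Qed.

Lemma Cmod_csqrt (u : C) : Cmod (csqrt u) * Cmod (csqrt u) = Cmod u.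
Proof. rewrite <- Cmod_mult, csqrt_sqr. reflexivity. Qed.

Lemma Cmod_csqrt_le_1 (u : C) : Cmod u <= 1 -> Cmod (csqrt u) <= 1.
Proof. intros H. pose proof (Cmod_csqrt u). pose proof (Cmod_ge_0 (csqrt u)). nra. Qed.

Lemma Cmod_csqrt_lt_1 (u : C) : Cmod u < 1 -> Cmod (csqrt u) < 1.
Proof. intros H. pose proof (Cmod_csqrt u). pose proof (Cmod_ge_0 (csqrt u)). nra. Qed.

Lemma csqrt_0 : csqrt 0 = 0.
Proof.
  pose proof (Cmod_csqrt 0) as H. rewrite Cmod_0 in H.
  apply Cmod_eq_0. pose proof (Cmod_ge_0 (csqrt 0)). nra.
Qed.

Lemma Cderiv_even_0 (f : C -> C) (l : C) :
  (forall z, f (- z)%C = f z) -> Cderiv f 0 l -> l = 0.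
Proof.
  intros Hev Hd. apply Cmod_eq_0, Rle_antisym; [|apply Cmod_ge_0]. apply Rle_plus_epsilon.
  intros e He. rewrite Rplus_0_l.
  destruct (proj1 (Cderiv_iff f 0 l) Hd (e / 2)) as [d [Hdp H]]; [lra|].
  set (h := RtoC (d / 2)). assert (Hh : Cmod h = d / 2) by (unfold h; rewrite Cmod_R, Rabs_right; lra).
  pose proof (H h ltac:(rewrite Cminus_0_r; lra)) as A.
  pose proof (H (- h)%C ltac:(rewrite Cminus_0_r, Cmod_opp; lra)) as B.
  rewrite Hev, !Cminus_0_r in *. rewrite Cmod_opp in B.
  assert (Cmod (2 * (h * l)) <= e / 2 * Cmod h + e / 2 * Cmod h).
  { replace (2 * (h * l))%C with ((f h - f 0 - - h * l) - (f h - f 0 - h * l))%C by ring.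
    eapply Rle_trans; [apply Cmod_minus_le|]. lra. }
  rewrite !Cmod_mult, Cmod_R, Rabs_right, Hh in H0 by lra. nra.
Qed.

Section QuadraticLike.

Variables (f : C -> C) (L : C) (D : nat -> C -> C).
Hypothesis HD0 : forall z, D 0%nat z = f z.
Hypothesis HD : forall n z, Cderiv (D n) z (D (S n) z).
Hypothesis Heven : forall z, f (- z)%C = f z.
Hypothesis Hquad : forall z1 z2, Cmod z1 <= 1 -> Cmod z2 <= 1 ->
  Cmod (f z1 - f z2 - L * (z1 * z1 - z2 * z2)) <= 41 / 44 * Cmod (z1 * z1 - z2 * z2).
Hypothesis HL : 39 / 8 <= Cmod L <= 41 / 8.
Hypothesis Hf0 : Cmod (f 0) <= 9 / 4.
Hypothesis HD2 : D 2%nat 0 <> 0.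

(** [f] factors through [z * z]: this is the map [g] with [f z = g (z ^ 2)]. *)
Definition f_csqrt (u : C) : C := f (csqrt u).

Lemma f_eq_f_csqrt_sqr (z : C) : f z = f_csqrt (z * z).
Proof.
  unfold f_csqrt. destruct (Csqr_eq (csqrt (z * z)) z (csqrt_sqr _)) as [->| ->]; auto.
Qed.

Lemma f_csqrt_quad (u1 u2 : C) : Cmod u1 <= 1 -> Cmod u2 <= 1 ->
  Cmod (f_csqrt u1 - f_csqrt u2 - L * (u1 - u2)) <= 41 / 44 * Cmod (u1 - u2).
Proof.
  intros H1 H2. unfold f_csqrt.
  pose proof (Hquad (csqrt u1) (csqrt u2) (Cmod_csqrt_le_1 _ H1) (Cmod_csqrt_le_1 _ H2)) as H.
  rewrite !csqrt_sqr in H. exact H.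
Qed.

Lemma f_csqrt_lower (u1 u2 : C) : Cmod u1 <= 1 -> Cmod u2 <= 1 ->
  347 / 88 * Cmod (u1 - u2) <= Cmod (f_csqrt u1 - f_csqrt u2).
Proof.
  intros H1 H2. pose proof (f_csqrt_quad u1 u2 H1 H2) as K.
  pose proof (Cmod_minus_le (f_csqrt u1 - f_csqrt u2) (f_csqrt u1 - f_csqrt u2 - L * (u1 - u2))) as T.
  replace (f_csqrt u1 - f_csqrt u2 - (f_csqrt u1 - f_csqrt u2 - L * (u1 - u2)))%C
    with (L * (u1 - u2))%C in T by ring.
  rewrite Cmod_mult in T. pose proof (Cmod_ge_0 (u1 - u2)). nra.
Qed.

Lemma f_csqrt_upper (u1 u2 : C) : Cmod u1 <= 1 -> Cmod u2 <= 1 ->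
  Cmod (f_csqrt u1 - f_csqrt u2) <= 7 * Cmod (u1 - u2).
Proof.
  intros H1 H2. pose proof (f_csqrt_quad u1 u2 H1 H2) as K.
  replace (f_csqrt u1 - f_csqrt u2)%C
    with ((f_csqrt u1 - f_csqrt u2 - L * (u1 - u2)) + L * (u1 - u2))%C by ring.
  eapply Rle_trans; [apply Cmod_triangle|]. rewrite Cmod_mult.
  pose proof (Cmod_ge_0 (u1 - u2)). nra.
Qed.

Lemma f_lower (z1 z2 : C) : Cmod z1 <= 1 -> Cmod z2 <= 1 ->
  347 / 88 * Cmod (z1 * z1 - z2 * z2) <= Cmod (f z1 - f z2).
Proof.
  intros H1 H2. rewrite (f_eq_f_csqrt_sqr z1), (f_eq_f_csqrt_sqr z2).
  apply f_csqrt_lower; apply Cmod_sqr_le_1; auto.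
Qed.

Lemma f_eq_sqr_eq (z1 z2 : C) : Cmod z1 <= 1 -> Cmod z2 <= 1 -> f z1 = f z2 ->
  (z1 * z1)%C = (z2 * z2)%C.
Proof.
  intros H1 H2 E. pose proof (f_lower z1 z2 H1 H2) as Hl.
  rewrite E, Cminus_diag, Cmod_0 in Hl.
  apply Cmod_minus_eq_0. pose proof (Cmod_ge_0 (z1 * z1 - z2 * z2)). lra.
Qed.

(** Newton-like iteration [u - L^-1 (g u - w)], a contraction of ratio [1/5] by [f_csqrt_quad]. *)
Lemma f_csqrt_solve (c : C) (rho : R) (w : C) : 0 <= rho -> Cmod c + rho <= 1 ->
  Cmod (w - f_csqrt c) <= 4 / 5 * Cmod L * rho ->
  exists u, Cmod (u - c) <= rho /\ f_csqrt u = w.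
Proof.
  intros Hr Hc Hw.
  assert (Lnz : L <> 0) by (intros ->; rewrite Cmod_0 in HL; lra).
  set (T := fun u => (u - / L * (f_csqrt u - w))%C).
  assert (Ball : forall u, Cmod (u - c) <= rho -> Cmod u <= 1).
  { intros u Hu. pose proof (Cmod_triangle_minus u c 0). rewrite !Cminus_0_r in H. lra. }
  assert (Con : forall u v, Cmod (u - c) <= rho -> Cmod (v - c) <= rho ->
                  Cmod (T u - T v) <= 1 / 5 * Cmod (u - v)).
  { intros u v Hu Hv. unfold T.
    replace (u - / L * (f_csqrt u - w) - (v - / L * (f_csqrt v - w)))%C
      with (/ L * - (f_csqrt u - f_csqrt v - L * (u - v)))%C by (field; auto).
    rewrite Cmod_mult, Cmod_opp, Cmod_inv by auto.
    pose proof (f_csqrt_quad u v (Ball u Hu) (Ball v Hv)). pose proof (Cmod_ge_0 (u - v)).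
    apply (Rmult_le_reg_l (Cmod L)); [lra|]. rewrite <- Rmult_assoc, Rinv_r by lra. nra. }
  destruct (contraction_fixed_point T c rho (1 / 5)) as [u [Hu Tu]]; auto; [lra| |].
  - intros u Hu. eapply Rle_trans; [apply (Cmod_triangle_minus _ (T c))|].
    eapply Rle_trans; [apply Rplus_le_compat_r, Con; auto; rewrite Cminus_diag, Cmod_0; lra|].
    unfold T at 1. replace (c - / L * (f_csqrt c - w) - c)%C with (/ L * (w - f_csqrt c))%C by ring.
    rewrite Cmod_mult, Cmod_inv by auto.
    assert (/ Cmod L * Cmod (w - f_csqrt c) <= 4 / 5 * rho).
    { apply (Rmult_le_reg_l (Cmod L)); [lra|]. rewrite <- Rmult_assoc, Rinv_r by lra. lra. }
    lra.
  - exists u. split; auto. unfold T in Tu.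
    assert (Hz : (/ L * (f_csqrt u - w))%C = 0).
    { replace (/ L * (f_csqrt u - w))%C with (u - (u - / L * (f_csqrt u - w)))%C by ring.
      rewrite Tu. ring. }
    apply Cmult_integral in Hz as [Hz|Hz].
    + exfalso. apply C1_nz. rewrite <- (Cinv_r L Lnz), Hz. ring.
    + apply Cmod_minus_eq_0. rewrite Hz, Cmod_0. reflexivity.
Qed.

Lemma image_unit_disk_iff (w : C) :
  image_of f unit_disk w <-> exists u, Cmod u < 1 /\ f_csqrt u = w.
Proof.
  split.
  - intros [z [Hz <-]]. exists (z * z)%C. split; [apply Cmod_sqr_lt_1, Hz|].
    symmetry. apply f_eq_f_csqrt_sqr.
  - intros [u [Hu <-]]. exists (csqrt u). split; auto. apply Cmod_csqrt_lt_1, Hu.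
Qed.

(** [|w - f 0| <= 1 + 9/4 = 4/5 * 39/8 * 5/6]: the constants are tight. *)
Lemma closed_unit_disk_sub_image (w : C) : Cmod w <= 1 -> image_of f unit_disk w.
Proof.
  intros Hw. apply image_unit_disk_iff.
  destruct (f_csqrt_solve 0 (5 / 6) w) as [u [Hu Gu]]; [lra|rewrite Cmod_0; lra| |].
  - unfold f_csqrt. rewrite csqrt_0. eapply Rle_trans; [apply Cmod_minus_le|]. nra.
  - exists u. split; auto. rewrite Cminus_0_r in Hu. lra.
Qed.

Lemma open_image_unit_disk : openC (image_of f unit_disk).
Proof.
  intros w Hw. apply image_unit_disk_iff in Hw as [u0 [Hu0 Gu0]].
  set (rho := (1 - Cmod u0) / 2). assert (Hr : 0 < rho) by (unfold rho; lra).
  exists (4 / 5 * Cmod L * rho). split; [nra|].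
  intros y Hy. apply image_unit_disk_iff.
  destruct (f_csqrt_solve u0 rho y) as [u [Hu Gu]]; [lra|unfold rho; lra|rewrite Gu0; lra|].
  exists u. split; auto. pose proof (Cmod_triangle_minus u u0 0). rewrite !Cminus_0_r in H.
  unfold rho in *. lra.
Qed.

Definition f_csqrt_inv (w : C) : C :=
  epsilon (inhabits (RtoC 0)) (fun u => Cmod u < 1 /\ f_csqrt u = w).

Lemma f_csqrt_inv_spec (w : C) : image_of f unit_disk w ->
  Cmod (f_csqrt_inv w) < 1 /\ f_csqrt (f_csqrt_inv w) = w.
Proof. intros H. apply image_unit_disk_iff in H. unfold f_csqrt_inv. apply epsilon_spec, H. Qed.

Lemma simply_connected_image : simply_connectedC (image_of f unit_disk).
Proof.
  apply (simply_connectedC_of_lipschitz_chart _ f_csqrt f_csqrt_inv 7 (88 / 347)); try lra.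
  - intros u Hu. apply image_unit_disk_iff. exists u; auto.
  - intros w Hw. apply (f_csqrt_inv_spec w Hw).
  - intros w Hw. apply (f_csqrt_inv_spec w Hw).
  - intros u v Hu Hv. unfold unit_disk in *. apply f_csqrt_upper; lra.
  - intros w1 w2 H1 H2.
    destruct (f_csqrt_inv_spec w1 H1) as [A1 B1], (f_csqrt_inv_spec w2 H2) as [A2 B2].
    pose proof (f_csqrt_lower (f_csqrt_inv w1) (f_csqrt_inv w2) ltac:(lra) ltac:(lra)) as H.
    rewrite B1, B2 in H. lra.
Qed.

Lemma Cderiv_f (z : C) : Cderiv f z (D 1%nat z).
Proof. apply (Cderiv_ext (D 0)); auto. Qed.

Lemma critical_point_0 : D 1%nat 0 = 0.
Proof. apply (Cderiv_even_0 f); [exact Heven|apply Cderiv_f]. Qed.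

(** Near a critical point [z <> 0], [f] would vary by [o(|y - z|)], against [f_lower]. *)
Lemma no_critical_point_off_0 (z : C) : z <> 0 -> Cmod z < 1 -> D 1%nat z <> 0.
Proof.
  intros Hz0 Hz1 E. pose proof (Cderiv_f z) as Hd. rewrite E in Hd.
  assert (Pz : 0 < Cmod z) by (apply Cmod_gt_0; auto).
  destruct (proj1 (Cderiv_iff f z 0) Hd (347 / 88 * Cmod z)) as [d [Hdp H]]; [nra|].
  set (s := Rmin (1 / 2) (d / (2 * Cmod z))).
  assert (Hs1 : s <= 1 / 2) by apply Rmin_l.
  assert (Hs2 : s <= d / (2 * Cmod z)) by apply Rmin_r.
  assert (Hs0 : 0 < s) by (apply Rmin_pos; [lra|apply Rdiv_lt_0_compat; lra]).
  assert (Hsd : s * Cmod z <= d / 2).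
  { apply (Rle_trans _ (d / (2 * Cmod z) * Cmod z)); [apply Rmult_le_compat_r; lra|].
    right. field. lra. }
  set (y := (RtoC (1 - s) * z)%C).
  assert (Hyz : Cmod (y - z) = s * Cmod z).
  { unfold y. replace (RtoC (1 - s) * z - z)%C with (RtoC (- s) * z)%C
      by (rewrite RtoC_opp, RtoC_minus; ring).
    rewrite Cmod_RtoC_mult, Rabs_left by lra. ring. }
  specialize (H y ltac:(lra)). rewrite Hyz, Cmult_0_r, Cminus_0_r in H.
  assert (Hy1 : Cmod y <= 1) by (unfold y; rewrite Cmod_RtoC_mult, Rabs_right by lra; nra).
  pose proof (f_lower y z Hy1 ltac:(lra)) as Lo.
  replace (y * y - z * z)%C with (RtoC (s * s - 2 * s) * (z * z))%C in Lo
    by (unfold y; rewrite !RtoC_minus, !RtoC_mult; ring).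
  rewrite Cmod_RtoC_mult, Cmod_mult, Rabs_left in Lo by nra.
  assert (0 < s * (Cmod z * Cmod z)) by (apply Rmult_lt_0_compat; nra).
  nra.
Qed.

Lemma derivs_on_unit_disk : derivs_on unit_disk f D.
Proof. split; intros; auto. Qed.

Lemma multiplicity_on_0 : multiplicity_on unit_disk f 0 2.
Proof.
  split; [lia|]. exists D. split; [apply derivs_on_unit_disk|]. split; [exact HD2|].
  intros j Hj. replace j with 1%nat by lia. apply critical_point_0.
Qed.

Lemma multiplicity_on_simple (z : C) : z <> 0 -> Cmod z < 1 -> multiplicity_on unit_disk f z 1.
Proof.
  intros Hz0 Hz1. split; [lia|]. exists D. split; [apply derivs_on_unit_disk|].
  split; [apply no_critical_point_off_0; auto|]. intros j Hj; lia.
Qed.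

Lemma preimage_unit_disk_iff (z0 z : C) : Cmod z0 < 1 ->
  (unit_disk z /\ f z = f z0) <-> (z = z0 \/ z = (- z0)%C).
Proof.
  intros Hz0. unfold unit_disk. split.
  - intros [Hz E]. apply Csqr_eq, f_eq_sqr_eq; auto; lra.
  - intros [-> | ->]; [auto|]. rewrite Cmod_opp. auto.
Qed.

Lemma degree2_on_unit_disk : degree2_on unit_disk (image_of f unit_disk) f.
Proof.
  intros w [z0 [Hz0 <-]]. unfold unit_disk in Hz0.
  destruct (Ceq_dec z0 0) as [->|Hnz].
  - exists ((RtoC 0, 2%nat) :: nil). simpl. split; [|split; [|split]].
    + repeat constructor. simpl; tauto.
    + intros z. rewrite preimage_unit_disk_iff by auto.
      replace (- 0)%C with (RtoC 0) by ring.
      split; [intros [<-|[]]; auto|intros [-> | ->]; auto].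
    + intros p [<-|[]]. apply multiplicity_on_0.
    + reflexivity.
  - assert (Hopp : z0 <> (- z0)%C).
    { intros E. apply Hnz. replace z0 with (/ 2 * (z0 + z0))%C by field.
      rewrite E at 2. ring. }
    exists ((z0, 1%nat) :: ((- z0)%C, 1%nat) :: nil). simpl. split; [|split; [|split]].
    + constructor; [simpl; intuition|]. repeat constructor. simpl; tauto.
    + intros z. rewrite preimage_unit_disk_iff by auto.
      split; [intros [<-|[<-|[]]]; auto|intros [-> | ->]; auto].
    + intros p [<-|[<-|[]]]; simpl; apply multiplicity_on_simple; auto.
      * intros E. apply Hnz. replace z0 with (- - z0)%C by ring. rewrite E. ring.
      * rewrite Cmod_opp. exact Hz0.
    + reflexivity.
Qed.

(** Points of the unit circle are not mapped into the image of the open disk. *)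
Lemma proper_on_unit_disk : proper_on unit_disk (image_of f unit_disk) f.
Proof.
  intros K HK HKW.
  apply (compactC_ext (fun z => Cmod (z - 0) <= 1 /\ K (f z))).
  - intros z. rewrite Cminus_0_r. unfold unit_disk.
    split; intros [Hz Kz]; split; auto; [|lra].
    destruct (Rle_lt_or_eq_dec _ _ Hz) as [|E]; auto. exfalso.
    destruct (HKW _ Kz) as [z' [Hz' Ez']]. unfold unit_disk in Hz'.
    pose proof (f_eq_sqr_eq z' z ltac:(lra) Hz Ez') as S.
    apply (f_equal Cmod) in S. rewrite !Cmod_mult, E in S. pose proof (Cmod_ge_0 z'). nra.
  - apply compactC_disk_inter. intros y Hy.
    destruct (compactC_complement_open K HK (f y) Hy) as [e [He He']].
    destruct (Cderiv_cont f y _ (Cderiv_f y) e He) as [d [Hd Hd']].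
    exists d. split; [exact Hd|]. intros x Hx. apply He', Hd', Hx.
Qed.

Lemma quadratic_like_unit_disk : quadratic_like f unit_disk (image_of f unit_disk).
Proof.
  assert (H0 : unit_disk 0) by (unfold unit_disk; rewrite Cmod_0; lra).
  repeat split.
  - exists (RtoC 0). exact H0.
  - exists (f 0), (RtoC 0). auto.
  - intros z Hz. unfold unit_disk in *. exists (1 - Cmod z). split; [lra|].
    intros y Hy. pose proof (Cmod_triangle_minus y z 0). rewrite !Cminus_0_r in H. lra.
  - apply open_image_unit_disk.
  - apply simply_connected_unit_disk.
  - apply simply_connected_unit_disk.
  - apply simply_connected_image.
  - apply simply_connected_image.
  - apply compact_closure_unit_disk.
  - intros z Hz. apply closed_unit_disk_sub_image, closure_unit_disk, Hz.
  - intros z Hz. exists z. auto.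
  - intros z _. exists (D 1%nat z). apply Cderiv_f.
  - apply proper_on_unit_disk.
  - apply degree2_on_unit_disk.
Qed.

End QuadraticLike.

(** * Perturbations of [f0] *)

Lemma derivs_close_to_f0 (f : C -> C) (d : nat -> C -> C) :
  derivs_on Cplane f d ->
  Rbar_lt (B_norm (fun z => f z - f0 z)%C) (Finite (1 / 4)) ->
  forall j, Cmod (d j 0 - f0_derivs j 0) < 1 / 4.
Proof.
  intros [Hd0 Hd] Hn j.
  set (dh := fun n z => (d n z - f0_derivs n z)%C).
  assert (Hdh : derivs_on Cplane (fun z => f z - f0 z)%C dh).
  { destruct derivs_on_f0 as [E0 E1]. split.
    - intros z Hz. unfold dh. rewrite Hd0, E0; auto.
    - intros n z Hz. apply Cderiv_minus; auto. }
  assert (Hin : Rbar_le (Cmod (dh j 0)) (B_norm (fun z => f z - f0 z)%C)).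
  { apply Lub_Rbar_correct. exists dh. split; auto. exists j. reflexivity. }
  exact (Rbar_le_lt_trans _ _ _ Hin Hn).
Qed.

Section NearF0.

Variables (f : C -> C) (d : nat -> C -> C).
Hypothesis HD0 : forall z, d 0%nat z = f z.
Hypothesis HD : forall n z, Cderiv (d n) z (d (S n) z).
Hypothesis Heven : forall z, f (- z)%C = f z.
Hypothesis Hclose : forall j, Cmod (d j 0 - f0_derivs j 0) < 1 / 4.

Lemma near_f0_even_derivs_close (k : nat) : (1 <= k)%nat -> Cmod (d (2 * k) 0 - 10) < 1 / 4.
Proof.
  intros Hk. destruct k as [|k]; [lia|].
  pose proof (Hclose (2 * S k)) as H. rewrite f0_derivs_even_0 in H. exact H.
Qed.

Lemma near_f0_even_derivs_le (k : nat) : (1 <= k)%nat -> Cmod (d (2 * k) 0) <= 41 / 4.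
Proof.
  intros Hk. pose proof (near_f0_even_derivs_close k Hk).
  pose proof (Cmod_triangle (d (2 * k) 0 - 10) 10). rewrite Cmod_R, Rabs_right in H0 by lra.
  replace (d (2 * k) 0 - 10 + 10)%C with (d (2 * k) 0) in H0 by ring. lra.
Qed.

Lemma near_f0_half_second_deriv : 39 / 8 <= Cmod (d 2%nat 0 / 2) <= 41 / 8.
Proof.
  pose proof (near_f0_even_derivs_close 1 (le_n 1)) as H. simpl Nat.mul in H.
  assert (E : Cmod (d 2%nat 0 / 2 - 5) < 1 / 8).
  { replace (d 2%nat 0 / 2 - 5)%C with (/ 2 * (d 2%nat 0 - 10))%C by (field; intros E; injection E; lra).
    rewrite Cmod_mult, Cmod_inv, Cmod_R, Rabs_right by (lra || (intros E; injection E; lra)). lra. }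
  pose proof (Cmod_triangle (d 2%nat 0 / 2 - 5) 5) as Up.
  pose proof (Cmod_triangle (5 - d 2%nat 0 / 2) (d 2%nat 0 / 2)) as Lo.
  replace (d 2%nat 0 / 2 - 5 + 5)%C with (d 2%nat 0 / 2)%C in Up by ring.
  replace (5 - d 2%nat 0 / 2 + d 2%nat 0 / 2)%C with (RtoC 5) in Lo by ring.
  rewrite Cmod_minus_sym in Lo. rewrite Cmod_R, Rabs_right in Up, Lo by lra. lra.
Qed.

Lemma near_f0_second_deriv_neq_0 : d 2%nat 0 <> 0.
Proof.
  intros E. pose proof near_f0_half_second_deriv as H. rewrite E in H.
  replace (0 / 2)%C with (RtoC 0) in H by (field; intros E'; injection E'; lra).
  rewrite Cmod_0 in H. lra.
Qed.

Lemma near_f0_value_close : Cmod (f 0 + 2) < 1 / 4.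
Proof.
  pose proof (Hclose 0) as H. rewrite f0_derivs_0_0, HD0 in H.
  replace (f 0 - RtoC (-2))%C with (f 0 + 2)%C in H; [exact H|].
  destruct (f 0). unfold RtoC, Cminus, Cplus, Copp. simpl. f_equal; ring.
Qed.

Lemma near_f0_value_le : Cmod (f 0) <= 9 / 4.
Proof.
  pose proof near_f0_value_close. pose proof (Cmod_minus_le (f 0 + 2) 2).
  replace (f 0 + 2 - 2)%C with (f 0) in H0 by ring. rewrite Cmod_R, Rabs_right in H0 by lra. lra.
Qed.

Lemma near_f0_quadratic_estimate (z1 z2 : C) : Cmod z1 <= 1 -> Cmod z2 <= 1 ->
  Cmod (f z1 - f z2 - d 2%nat 0 / 2 * (z1 * z1 - z2 * z2)) <= 41 / 44 * Cmod (z1 * z1 - z2 * z2).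
Proof.
  intros H1 H2. rewrite <- !HD0. replace (41 / 44) with (41 / 4 / 11) by field.
  apply even_quadratic_approx; auto.
  - intros z. rewrite !HD0. apply Heven.
  - apply near_f0_even_derivs_le.
Qed.

Lemma near_f0_quadratic_like : quadratic_like f unit_disk (image_of f unit_disk).
Proof.
  apply (quadratic_like_unit_disk f (d 2%nat 0 / 2) d); auto.
  - apply near_f0_quadratic_estimate.
  - apply near_f0_half_second_deriv.
  - apply near_f0_value_le.
  - apply near_f0_second_deriv_neq_0.
Qed.

Lemma near_f0_Re_value_lt : Re (f 0) < -1.
Proof.
  pose proof near_f0_value_close. pose proof (re_le_Cmod (f 0 + 2)).
  rewrite re_plus in H0. simpl Re in H0 at 2.
  assert (Hlt : Rabs (Re (f 0) + 2) < 1 / 4) by lra. apply Rabs_def2 in Hlt. lra.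
Qed.

End NearF0.

Lemma conj_symmetric_real_at_0 (f : C -> C) :
  (forall z, f (Cconj z) = Cconj (f z)) -> f 0 = RtoC (Re (f 0)).
Proof.
  intros Hconj. pose proof (f_equal Im (Hconj 0)) as H.
  replace (Cconj 0) with (RtoC 0) in H by (unfold Cconj, RtoC; simpl; f_equal; ring).
  rewrite im_conj in H. destruct (f 0) as [a b]. unfold RtoC. simpl in *. f_equal. lra.
Qed.

Theorem lemma4p3 (f : C -> C) :
  in_B f ->
  Rbar_lt (B_norm (fun z => Cminus (f z) (f0 z))) (Finite (1/4)) ->
  quadratic_like f unit_disk (image_of f unit_disk) /\
  exists x : R, x < -1 /\ f 0%C = RtoC x.
Proof.
  intros [_ [Hconj [Heven [d [Hder _]]]]] Hn.
  pose proof (derivs_close_to_f0 f d Hder Hn) as Hclose.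
  destruct Hder as [Hd0 Hd].
  assert (HD0 : forall z, d 0%nat z = f z) by (intros; apply Hd0; exact I).
  assert (HD : forall n z, Cderiv (d n) z (d (S n) z)) by (intros; apply Hd; exact I).
  split.
  - exact (near_f0_quadratic_like f d HD0 HD Heven Hclose).
  - exists (Re (f 0)). split.
    + exact (near_f0_Re_value_lt f d HD0 Hclose).
    + apply conj_symmetric_real_at_0, Hconj.
Qed.
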